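(* Let $0<\delta<\frac12$ and let $G$ be a subgroup of $\mathrm{Diff}_0^3(I)$ satisfying condition (a): there exists $c>0$ such that for all $g_1\ne g_2$ in $G$, $\sup_{t\in[0,1]}|\log(g_1'(t))-\log(g_2'(t))|\ge c$. Define $r_\delta(f)=\inf_{h\in G}p_\delta(h^{-1}\circ f)$ for $f\in\mathrm{Diff}_+^{1,\delta}(I)$. Then the functions $p_\delta$ and $r_\delta$ are continuous from $\mathrm{Diff}_+^{1,\delta}(I)$ (with the norm $\|\cdot\|_{1,\delta}$) to $\mathbb{R}$.
   Context: $I=[0,1]$. $\mathrm{Diff}_+^1(I)$ is the set of $C^1$ diffeomorphisms of $I$ fixing $0$ and $1$. $C_0^{1,\delta}(I)$ is the set of continuously differentiable $f:I\to\mathbb{R}$ with $f(0)=0$ and $f'$ Hölder of exponent $\delta$, normed by $\|f\|_{1,\delta}=|f'(0)|+\sup_{t_1\ne t_2}\frac{|f'(t_2)-f'(t_1)|}{|t_2-t_1|^\delta}$; $\mathrm{Diff}_+^{1,\delta}(I)=\mathrm{Diff}_+^1(I)\cap C_0^{1,\delta}(I)$ with this norm. $\mathrm{Diff}_0^3(I)$ is the set of $C^3$ diffeomorphisms $f$ of $I$ fixing $0$ and $1$ with $f'(0)=f'(1)=1$. For $f\in\mathrm{Diff}_+^{1,\delta}(I)$, $p_\delta(f)=|\log(f'(0))|+\sup_{t_1\ne t_2\in I}\frac{|\log(f'(t_2))-\log(f'(t_1))|}{|t_2-t_1|^\delta}$. *)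

From Stdlib Require Import Reals Lra ClassicalEpsilon.
Open Scope R_scope.

(* The interval I = [0,1] as a predicate on R. Maps of I are represented by
   functions R -> R; only their values on I matter. *)
Definition I (x : R) : Prop := 0 <= x <= 1.

Definition has_derI (f : R -> R) (x l : R) : Prop :=
  forall eps, 0 < eps -> exists del, 0 < del /\
    forall y, I y -> y <> x -> Rabs (y - x) < del ->
      Rabs ((f y - f x) / (y - x) - l) < eps.

(* The derivative relative to I (chosen; unique on I when it exists). *)
Definition derI (f : R -> R) (x : R) : R :=
  epsilon (inhabits 0) (fun l => has_derI f x l).

Fixpoint derIn (n : nat) (f : R -> R) : R -> R :=
  match n with O => f | S m => derI (derIn m f) end.

Definition contI (u : R -> R) : Prop :=
  forall x, I x -> forall eps, 0 < eps -> exists del, 0 < del /\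
    forall y, I y -> Rabs (y - x) < del -> Rabs (u y - u x) < eps.

Definition is_Ck (k : nat) (f : R -> R) : Prop :=
  (forall j, (j < k)%nat -> forall x, I x -> has_derI (derIn j f) x (derIn (S j) f x))
  /\ contI (derIn k f).

Definition maps_I (f : R -> R) : Prop := forall x, I x -> I (f x).

Definition inv_on_I (f g : R -> R) : Prop :=
  maps_I f /\ maps_I g /\ forall x, I x -> g (f x) = x /\ f (g x) = x.

Definition same_on_I (f g : R -> R) : Prop := forall x, I x -> f x = g x.

Definition is_Ck_diffeo (k : nat) (f : R -> R) : Prop :=
  is_Ck k f /\ exists g, inv_on_I f g /\ is_Ck k g.

Definition Diff1p (f : R -> R) : Prop := is_Ck_diffeo 1 f /\ f 0 = 0 /\ f 1 = 1.

Definition Diff03 (f : R -> R) : Prop :=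
  is_Ck_diffeo 3 f /\ f 0 = 0 /\ f 1 = 1 /\ derI f 0 = 1 /\ derI f 1 = 1.

(* supremum / infimum of a set of reals (meaningful when they exist) *)
Definition is_glb (S : R -> Prop) (m : R) : Prop :=
  (forall r, S r -> m <= r) /\ (forall b, (forall r, S r -> b <= r) -> b <= m).
Definition Rsup (S : R -> Prop) : R := epsilon (inhabits 0) (fun m => is_lub S m).
Definition Rinf (S : R -> Prop) : R := epsilon (inhabits 0) (fun m => is_glb S m).

Definition holder_set (delta : R) (u : R -> R) (r : R) : Prop :=
  exists t1 t2, I t1 /\ I t2 /\ t1 <> t2 /\
    r = Rabs (u t2 - u t1) / Rpower (Rabs (t2 - t1)) delta.

Definition C01d (delta : R) (f : R -> R) : Prop :=
  is_Ck 1 f /\ f 0 = 0 /\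
  exists K, forall t1 t2, I t1 -> I t2 -> t1 <> t2 ->
    Rabs (derI f t2 - derI f t1) <= K * Rpower (Rabs (t2 - t1)) delta.

Definition norm1d (delta : R) (f : R -> R) : R :=
  Rabs (derI f 0) + Rsup (holder_set delta (derI f)).

Definition Diff1d (delta : R) (f : R -> R) : Prop := Diff1p f /\ C01d delta f.

Definition p_delta (delta : R) (f : R -> R) : R :=
  Rabs (ln (derI f 0)) + Rsup (holder_set delta (fun t => ln (derI f t))).

(* G (a set of representatives of maps of I) is a subgroup of Diff^3_0(I) *)
Definition is_subgroup_Diff03 (G : (R -> R) -> Prop) : Prop :=
  (forall g, G g -> Diff03 g) /\
  (exists e, G e /\ same_on_I e (fun x => x)) /\
  (forall g h, G g -> G h -> exists k, G k /\ same_on_I k (fun x => g (h x))) /\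
  (forall g, G g -> exists k, G k /\ inv_on_I g k).

Definition condition_a (G : (R -> R) -> Prop) : Prop :=
  exists c, 0 < c /\ forall g1 g2, G g1 -> G g2 -> ~ same_on_I g1 g2 ->
    Rsup (fun r => exists t, I t /\ r = Rabs (ln (derI g1 t) - ln (derI g2 t))) >= c.

Definition r_delta (G : (R -> R) -> Prop) (delta : R) (f : R -> R) : R :=
  Rinf (fun r => exists h hinv, G h /\ inv_on_I h hinv /\
                   r = p_delta delta (fun x => hinv (f x))).

Definition cont_Diff1d (delta : R) (F : (R -> R) -> R) : Prop :=
  forall f, Diff1d delta f -> forall eps, 0 < eps -> exists eta, 0 < eta /\
    forall g, Diff1d delta g -> norm1d delta (fun x => g x - f x) < eta ->
      Rabs (F g - F f) < eps.

From Stdlib Require Import Reals Lra Lia ZArith List.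
From Stdlib Require Import ClassicalEpsilon FunctionalExtensionality PropExtensionality.
Open Scope R_scope.

(** By the chain rule [(k o f)' = k' o f * f'], both [p_delta] and, for each fixed
    [k] in [G], the map [f |-> p_delta (k o f)] are continuous: [ln u] depends
    Lipschitz-continuously on a positive Hölder function [u] in the Hölder norm.
    As an infimum of continuous functions, [r_delta] is upper semicontinuous. For
    lower semicontinuity at [f] only the [k] with [p_delta (k o g) <= r_delta f + 1]
    for [g] near [f] matter. Their [ln k'] share a Hölder bound and vanish at [0],
    so they are determined up to [2c/3] by their values on a finite grid rounded
    to multiples of [c/3]; by condition (a) two of them with the same rounded
    values coincide. Hence only finitely many [k] are relevant, and the minimum of
    their continuity moduli works. *)

(** Unlike [has_derI], this form of the derivative also covers [y = x]. *)
Definition has_derI_lin (f : R -> R) (x l : R) : Prop :=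
  forall eps, 0 < eps -> exists del, 0 < del /\
    forall y, I y -> Rabs (y - x) < del ->
      Rabs (f y - f x - l * (y - x)) <= eps * Rabs (y - x).

Lemma has_derI_to_lin f x l : has_derI f x l -> has_derI_lin f x l.
Proof.
  intros H eps Heps. destruct (H eps Heps) as [d [Hd Hy]].
  exists d; split; auto. intros y Iy Hyx.
  destruct (Req_dec y x) as [->|Hne].
  { replace (f x - f x - l * (x - x)) with 0 by ring. rewrite Rabs_R0.
    replace (x - x) with 0 by ring. rewrite Rabs_R0. lra. }
  specialize (Hy y Iy Hne Hyx).
  assert (Hyx0 : y - x <> 0) by lra.
  replace (f y - f x - l * (y - x)) with (((f y - f x) / (y - x) - l) * (y - x))
    by (field; auto).
  rewrite Rabs_mult. apply Rmult_le_compat_r; [apply Rabs_pos|lra].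
Qed.

Lemma has_derI_of_lin f x l : has_derI_lin f x l -> has_derI f x l.
Proof.
  intros H eps Heps. destruct (H (eps/2)) as [d [Hd Hy]]; [lra|].
  exists d; split; auto. intros y Iy Hne Hyx.
  specialize (Hy y Iy Hyx).
  assert (Hyx0 : y - x <> 0) by lra.
  assert (Ha : 0 < Rabs (y - x)) by (apply Rabs_pos_lt; auto).
  replace ((f y - f x) / (y - x) - l) with ((f y - f x - l * (y - x)) / (y - x))
    by (field; auto).
  unfold Rdiv. rewrite Rabs_mult, Rabs_inv.
  apply (Rmult_le_compat_r (/ Rabs (y - x))) in Hy; [|left; apply Rinv_0_lt_compat; auto].
  replace (eps / 2 * Rabs (y - x) * / Rabs (y - x)) with (eps/2) in Hy by (field; lra).
  lra.
Qed.

Lemma exists_near_in_I x d : I x -> 0 < d -> exists y, I y /\ y <> x /\ Rabs (y - x) < d.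
Proof.
  intros [H0 H1] Hd. set (e := Rmin d 1 / 2).
  assert (He : 0 < e) by (unfold e; apply Rmin_case; lra).
  assert (He2 : e < d /\ e <= 1/2)
    by (unfold e; split; [apply Rmin_case_strong; lra | apply Rmin_case_strong; intros; lra]).
  destruct (Rle_dec x (1/2)).
  - exists (x + e). unfold I. split; [lra|split;[lra|]].
    replace (x + e - x) with e by ring. rewrite Rabs_right; lra.
  - exists (x - e). unfold I. split; [lra|split;[lra|]].
    replace (x - e - x) with (- e) by ring. rewrite Rabs_Ropp, Rabs_right; lra.
Qed.

Lemma has_derI_lin_unique f x l1 l2 :
  I x -> has_derI_lin f x l1 -> has_derI_lin f x l2 -> l1 = l2.
Proof.
  intros Ix H1 H2. destruct (Req_dec l1 l2) as [|Hne]; auto. exfalso.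
  assert (Hp : 0 < Rabs (l1 - l2)) by (apply Rabs_pos_lt; lra).
  destruct (H1 (Rabs (l1 - l2) / 4)) as [d1 [Hd1 Hy1]]; [lra|].
  destruct (H2 (Rabs (l1 - l2) / 4)) as [d2 [Hd2 Hy2]]; [lra|].
  destruct (exists_near_in_I x (Rmin d1 d2) Ix) as [y [Iy [Hyx Hd]]]; [apply Rmin_case; lra|].
  assert (Hy1' := Hy1 y Iy (Rlt_le_trans _ _ _ Hd (Rmin_l _ _))).
  assert (Hy2' := Hy2 y Iy (Rlt_le_trans _ _ _ Hd (Rmin_r _ _))).
  assert (Hq : 0 < Rabs (y - x)) by (apply Rabs_pos_lt; lra).
  assert (E : (l1 - l2) * (y - x)
              = (f y - f x - l2 * (y - x)) - (f y - f x - l1 * (y - x))) by ring.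
  assert (Rabs ((l1 - l2) * (y - x)) <= Rabs (l1 - l2) / 2 * Rabs (y - x)).
  { rewrite E. eapply Rle_trans; [apply Rabs_triang|]. rewrite Rabs_Ropp. lra. }
  rewrite Rabs_mult in H.
  assert (Rabs (l1 - l2) * Rabs (y - x) > 0) by (apply Rmult_lt_0_compat; auto).
  lra.
Qed.

Lemma derI_eq_lin f x l : I x -> has_derI_lin f x l -> derI f x = l.
Proof.
  intros Ix H. unfold derI.
  assert (Hs : has_derI f x (epsilon (inhabits 0) (fun l => has_derI f x l))).
  { apply epsilon_spec. exists l. apply has_derI_of_lin; auto. }
  apply (has_derI_lin_unique f x); auto. apply has_derI_to_lin; auto.
Qed.

Lemma contI_of_has_derI_lin u u' :
  (forall x, I x -> has_derI_lin u x (u' x)) -> contI u.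
Proof.
  intros H x Ix eps Heps. destruct (H x Ix 1) as [d [Hd Hy]]; [lra|].
  set (l := u' x).
  assert (Hl : 0 < Rabs l + 2) by (pose proof (Rabs_pos l); lra).
  set (d' := Rmin d (eps / (Rabs l + 2))).
  assert (Hd' : 0 < d') by (unfold d'; apply Rmin_case; [lra| apply Rdiv_lt_0_compat; lra]).
  exists d'; split; auto. intros y Iy Hyx.
  assert (Hyx1 : Rabs (y - x) < d) by (eapply Rlt_le_trans; [apply Hyx|apply Rmin_l]).
  assert (Hyx2 : Rabs (y - x) < eps / (Rabs l + 2))
    by (eapply Rlt_le_trans; [apply Hyx|apply Rmin_r]).
  specialize (Hy y Iy Hyx1). fold l in Hy.
  replace (u y - u x) with ((u y - u x - l * (y - x)) + l * (y - x)) by ring.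
  eapply Rle_lt_trans; [apply Rabs_triang|]. rewrite Rabs_mult.
  assert (Rabs (y - x) * (Rabs l + 2) < eps).
  { apply (Rmult_lt_compat_r (Rabs l + 2)) in Hyx2; auto.
    replace (eps / (Rabs l + 2) * (Rabs l + 2)) with eps in Hyx2 by (field; lra). lra. }
  pose proof (Rabs_pos l). pose proof (Rabs_pos (y - x)). nra.
Qed.

Lemma contI_opp u : contI u -> contI (fun y => - u y).
Proof.
  intros H x Ix eps Heps. destruct (H x Ix eps Heps) as [d [Hd Hy]]. exists d; split; auto.
  intros y Iy Hyx. replace (- u y - - u x) with (- (u y - u x)) by ring. rewrite Rabs_Ropp; auto.
Qed.

Lemma has_derI_lin_ext f g x l :
  (forall y, I y -> f y = g y) -> I x -> has_derI_lin f x l -> has_derI_lin g x l.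
Proof.
  intros E Ix H eps Heps. destruct (H eps Heps) as [d [Hd Hy]]. exists d; split; auto.
  intros y Iy Hyx. rewrite <- (E y Iy), <- (E x Ix). auto.
Qed.

Lemma has_derI_lin_id x : has_derI_lin (fun y => y) x 1.
Proof.
  intros eps Heps. exists 1; split; [lra|]. intros y _ _.
  replace (y - x - 1 * (y - x)) with 0 by ring. rewrite Rabs_R0.
  pose proof (Rabs_pos (y - x)). nra.
Qed.

Lemma has_derI_lin_sub f g x a b :
  has_derI_lin f x a -> has_derI_lin g x b -> has_derI_lin (fun y => f y - g y) x (a - b).
Proof.
  intros Hf Hg eps Heps.
  destruct (Hf (eps/2)) as [d1 [Hd1 H1]]; [lra|].
  destruct (Hg (eps/2)) as [d2 [Hd2 H2]]; [lra|].
  exists (Rmin d1 d2); split; [apply Rmin_case; lra|]. intros y Iy Hyx.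
  specialize (H1 y Iy (Rlt_le_trans _ _ _ Hyx (Rmin_l _ _))).
  specialize (H2 y Iy (Rlt_le_trans _ _ _ Hyx (Rmin_r _ _))).
  replace (f y - g y - (f x - g x) - (a - b) * (y - x)) with
    ((f y - f x - a * (y - x)) - (g y - g x - b * (y - x))) by ring.
  eapply Rle_trans; [apply Rabs_triang|]. rewrite Rabs_Ropp. lra.
Qed.

Lemma has_derI_lin_local_lipschitz u x a : has_derI_lin u x a ->
  exists du, 0 < du /\ forall y, I y -> Rabs (y - x) < du ->
    Rabs (u y - u x) <= (Rabs a + 1) * Rabs (y - x).
Proof.
  intros Hu. destruct (Hu 1) as [du [Hdu H]]; [lra|]. exists du. split; auto.
  intros y Iy Hy. specialize (H y Iy Hy).
  replace (u y - u x) with ((u y - u x - a * (y - x)) + a * (y - x)) by ring.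
  eapply Rle_trans; [apply Rabs_triang|]. rewrite Rabs_mult. lra.
Qed.

Lemma has_derI_lin_comp u F x a b :
  maps_I u -> I x -> has_derI_lin u x a -> has_derI_lin F (u x) b ->
  has_derI_lin (fun y => F (u y)) x (b * a).
Proof.
  intros Mu Ix Hu HF eps Heps.
  set (A := Rabs a + 1). set (B := Rabs b + 1).
  assert (HA : 0 < A) by (unfold A; pose proof (Rabs_pos a); lra).
  assert (HB : 0 < B) by (unfold B; pose proof (Rabs_pos b); lra).
  destruct (has_derI_lin_local_lipschitz u x a Hu) as [du [Hdu Hux]].
  destruct (HF (eps / (2 * A))) as [dF [HdF HFy]]; [apply Rdiv_lt_0_compat; lra|].
  destruct (Hu (eps / (2 * B))) as [d3 [Hd3 Huy]]; [apply Rdiv_lt_0_compat; lra|].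
  exists (Rmin (Rmin du d3) (dF / A)).
  split; [repeat apply Rmin_case; try lra; apply Rdiv_lt_0_compat; lra|].
  intros y Iy Hyx. apply Rmin_Rgt in Hyx as [[H1 H2]%Rmin_Rgt H3].
  specialize (Hux y Iy H1). specialize (Huy y Iy H2).
  assert (HuF : Rabs (u y - u x) < dF).
  { eapply Rle_lt_trans; [apply Hux|]. apply (Rmult_lt_compat_l A) in H3; auto.
    replace (A * (dF / A)) with dF in H3 by (field; lra). fold A. lra. }
  specialize (HFy (u y) (Mu y Iy) HuF).
  replace (F (u y) - F (u x) - b * a * (y - x)) with
    ((F (u y) - F (u x) - b * (u y - u x)) + b * (u y - u x - a * (y - x))) by ring.
  eapply Rle_trans; [apply Rabs_triang|]. rewrite Rabs_mult.
  assert (X1 : eps / (2 * A) * Rabs (u y - u x) <= eps / 2 * Rabs (y - x)).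
  { replace (eps / 2 * Rabs (y - x)) with (eps / (2 * A) * (A * Rabs (y - x))) by (field; lra).
    apply Rmult_le_compat_l; [left; apply Rdiv_lt_0_compat; lra|auto]. }
  assert (X2 : Rabs b * Rabs (u y - u x - a * (y - x)) <= eps / 2 * Rabs (y - x)).
  { eapply Rle_trans; [apply Rmult_le_compat_l; [apply Rabs_pos|apply Huy]|].
    replace (eps / 2 * Rabs (y - x)) with (B * (eps / (2 * B)) * Rabs (y - x)) by (field; lra).
    rewrite <- Rmult_assoc. apply Rmult_le_compat_r; [apply Rabs_pos|].
    apply Rmult_le_compat_r; [left; apply Rdiv_lt_0_compat; lra|unfold B; lra]. }
  lra.
Qed.

Definition clamp (x : R) : R := Rmax 0 (Rmin 1 x).

Lemma clamp_I x : I (clamp x).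
Proof. unfold clamp, I. split; [apply Rmax_l|]. apply Rmax_lub; [lra|apply Rmin_l]. Qed.

Lemma clamp_id x : I x -> clamp x = x.
Proof. unfold clamp, I; intros [H0 H1]. rewrite Rmin_right by lra. rewrite Rmax_right; lra. Qed.

Lemma clamp_lipschitz x y : Rabs (clamp y - clamp x) <= Rabs (y - x).
Proof.
  unfold clamp. unfold Rmax, Rmin.
  repeat (destruct Rle_dec); repeat (destruct Rle_dec); apply Rabs_le;
  (destruct (Rle_dec 0 (y - x));
     [rewrite (Rabs_right (y - x)) by lra | rewrite (Rabs_left (y - x)) by lra]); lra.
Qed.

(** Extending a function on [I] by [u o clamp] makes the Stdlib theorems on
    [R] (MVT, IVT, extreme values) applicable. *)
Lemma continuity_clamp u x : contI u -> continuity_pt (fun y => u (clamp y)) x.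
Proof.
  intros H. unfold continuity_pt, continue_in, limit1_in, limit_in; simpl; unfold Rdist.
  intros eps Heps. destruct (H (clamp x) (clamp_I x) eps Heps) as [d [Hd Hy]].
  exists d; split; [lra|]. intros y [_ Hyx].
  apply Hy; [apply clamp_I|]. eapply Rle_lt_trans; [apply clamp_lipschitz|]; auto.
Qed.

Lemma derivable_pt_lim_clamp u u' c : (forall x, I x -> has_derI_lin u x (u' x)) ->
  0 < c < 1 -> derivable_pt_lim (fun y => u (clamp y)) c (u' c).
Proof.
  intros Hd Hc eps Heps.
  assert (Ic : I c) by (unfold I; lra).
  destruct (Hd c Ic (eps/2)) as [d [Hdp Hy]]; [lra|].
  set (d' := Rmin d (Rmin c (1 - c))).
  assert (Hd' : 0 < d') by (unfold d'; repeat apply Rmin_case; lra).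
  exists (mkposreal d' Hd'). simpl. intros h Hh0 Hh.
  assert (Hh1 : Rabs h < d) by (eapply Rlt_le_trans; [apply Hh|apply Rmin_l]).
  assert (Hh2 : Rabs h < c /\ Rabs h < 1 - c).
  { split; (eapply Rlt_le_trans; [apply Hh|]); unfold d';
      (eapply Rle_trans; [apply Rmin_r|]); [apply Rmin_l|apply Rmin_r]. }
  assert (Ich : I (c + h)).
  { destruct Hh2. unfold I.
    destruct (Rle_dec 0 h); [rewrite Rabs_right in * by lra | rewrite Rabs_left in * by lra]; lra. }
  rewrite (clamp_id _ Ich), (clamp_id _ Ic).
  specialize (Hy (c + h) Ich). replace (c + h - c) with h in Hy by ring.
  specialize (Hy Hh1).
  assert (Hp : 0 < Rabs h) by (apply Rabs_pos_lt; auto).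
  replace ((u (c + h) - u c) / h - u' c) with ((u (c + h) - u c - u' c * h) / h) by (field; auto).
  unfold Rdiv. rewrite Rabs_mult, Rabs_inv.
  apply (Rmult_le_compat_r (/ Rabs h)) in Hy; [|left; apply Rinv_0_lt_compat; auto].
  replace (eps / 2 * Rabs h * / Rabs h) with (eps/2) in Hy by (field; lra). lra.
Qed.

Lemma MVT_I u u' a b : (forall x, I x -> has_derI_lin u x (u' x)) -> I a -> I b -> a < b ->
  exists c, a < c < b /\ u b - u a = u' c * (b - a).
Proof.
  intros Hd Ia Ib Hab.
  set (uc := fun y => u (clamp y)).
  assert (Hder : forall c, a < c < b -> derivable_pt_lim uc c (u' c)).
  { intros c Hc. apply derivable_pt_lim_clamp; auto. destruct Ia, Ib; lra. }
  set (pr1 := fun c (P : a < c < b) =>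
                exist (fun l => derivable_pt_abs uc c l) (u' c) (Hder c P)).
  set (pr2 := fun c (P : a < c < b) => derivable_pt_id c).
  assert (Hc1 : forall c, a <= c <= b -> continuity_pt uc c).
  { intros c _. apply continuity_clamp. apply (contI_of_has_derI_lin u u'); auto. }
  assert (Hc2 : forall c, a <= c <= b -> continuity_pt id c).
  { intros c _. apply derivable_continuous_pt. apply derivable_pt_id. }
  destruct (MVT uc id a b pr1 pr2 Hab Hc1 Hc2) as [c [P E]].
  exists c; split; auto.
  unfold pr2 in E. rewrite derive_pt_id in E. unfold pr1 in E. simpl in E.
  unfold uc, id in E. rewrite (clamp_id _ Ia), (clamp_id _ Ib) in E. lra.
Qed.

Lemma MVT_I_abs u u' a b : (forall x, I x -> has_derI_lin u x (u' x)) -> I a -> I b ->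
  exists c, I c /\ Rabs (u b - u a) = Rabs (u' c) * Rabs (b - a).
Proof.
  intros Hd Ia Ib.
  destruct (Rtotal_order a b) as [Hab|[->|Hab]].
  - destruct (MVT_I u u' a b Hd Ia Ib Hab) as [c [Hc E]].
    exists c. split; [destruct Ia, Ib; unfold I; lra|]. rewrite E, Rabs_mult; auto.
  - exists b. split; auto. replace (u b - u b) with 0 by ring. replace (b - b) with 0 by ring.
    rewrite Rabs_R0. ring.
  - destruct (MVT_I u u' b a Hd Ib Ia Hab) as [c [Hc E]].
    exists c. split; [destruct Ia, Ib; unfold I; lra|].
    replace (u b - u a) with (- (u a - u b)) by ring. replace (b - a) with (- (a - b)) by ring.
    rewrite !Rabs_Ropp, E, Rabs_mult; auto.
Qed.

Definition lipschitzI u L :=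
  forall t1 t2, I t1 -> I t2 -> Rabs (u t2 - u t1) <= L * Rabs (t2 - t1).

Lemma lipschitz_of_deriv_bound u u' B :
  (forall x, I x -> has_derI_lin u x (u' x)) -> (forall x, I x -> Rabs (u' x) <= B) ->
  lipschitzI u B.
Proof.
  intros Hd HB a b Ia Ib. destruct (MVT_I_abs u u' a b Hd Ia Ib) as [c [Ic ->]].
  apply Rmult_le_compat_r; [apply Rabs_pos|auto].
Qed.

Lemma expansion_of_deriv_lower_bound g g' m :
  (forall x, I x -> has_derI_lin g x (g' x)) -> (forall x, I x -> m <= g' x) ->
  forall t1 t2, I t1 -> I t2 -> m * Rabs (t2 - t1) <= Rabs (g t2 - g t1).
Proof.
  intros Hd Hm t1 t2 I1 I2. destruct (MVT_I_abs g g' t1 t2 Hd I1 I2) as [c [Ic ->]].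
  apply Rmult_le_compat_r; [apply Rabs_pos|]. eapply Rle_trans; [apply (Hm c Ic)|apply Rle_abs].
Qed.

Lemma contI_attains_min u : contI u -> exists x0, I x0 /\ forall x, I x -> u x0 <= u x.
Proof.
  intros H. destruct (continuity_ab_min (fun y => u (clamp y)) 0 1) as [m [Hm Hm1]]; [lra| |].
  { intros c _. apply continuity_clamp; auto. }
  exists m. split; [exact Hm1|].
  intros x Ix. specialize (Hm x Ix). rewrite !clamp_id in Hm; auto.
Qed.

Lemma contI_bounded u : contI u -> exists B, forall x, I x -> Rabs (u x) <= B.
Proof.
  intros H. destruct (contI_attains_min u H) as [x0 [_ H0]].
  destruct (contI_attains_min (fun y => - u y) (contI_opp u H)) as [x1 [_ H1]].
  exists (Rabs (u x0) + Rabs (u x1)). intros x Ix. specialize (H0 x Ix). specialize (H1 x Ix).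
  apply Rabs_le. pose proof (Rabs_pos (u x0)). pose proof (Rabs_pos (u x1)).
  pose proof (Rle_abs (- u x0)) as Q1. rewrite Rabs_Ropp in Q1. pose proof (Rle_abs (u x1)). lra.
Qed.

Lemma IVT_I u : contI u -> forall a b, I a -> I b -> a < b ->
  u a < 0 -> 0 < u b -> exists c, I c /\ u c = 0.
Proof.
  intros H a b Ia Ib Hab Ha Hb.
  assert (Hc : continuity (fun y => u (clamp y))) by (intro; apply continuity_clamp; auto).
  destruct (IVT _ a b Hc Hab) as [c [Hc1 Hc2]]; [rewrite clamp_id; auto|rewrite clamp_id; auto|].
  exists c. assert (Ic : I c) by (destruct Ia, Ib; unfold I; lra). split; auto.
  rewrite clamp_id in Hc2; auto.
Qed.

Lemma Rabs_le_inv x a : Rabs x <= a -> - a <= x <= a.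
Proof. intros H. pose proof (Rle_abs x). pose proof (Rle_abs (- x)). rewrite Rabs_Ropp in H1. lra. Qed.

Lemma exp_le x y : x <= y -> exp x <= exp y.
Proof. intros [H| ->]; [left; apply exp_increasing; auto|lra]. Qed.

Lemma ln_le x y : 0 < x -> x <= y -> ln x <= ln y.
Proof. intros H [H1| ->]; [left; apply ln_increasing; auto|lra]. Qed.

Lemma ln_lipschitz a b m : 0 < m -> m <= a -> m <= b -> Rabs (ln a - ln b) <= Rabs (a - b) / m.
Proof.
  intros Hm Ha Hb.
  assert (L : forall x y, m <= x -> m <= y -> ln x - ln y <= Rabs (x - y) / m).
  { intros x y Hx Hy.
    assert (E : ln x - ln y = ln (x / y)).
    { unfold Rdiv. rewrite ln_mult, ln_Rinv by (try apply Rinv_0_lt_compat; lra). ring. }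
    rewrite E. pose proof (exp_ineq1_le (ln (x / y))).
    rewrite exp_ln in H by (apply Rdiv_lt_0_compat; lra).
    assert (x / y - 1 = (x - y) / y) by (field; lra).
    assert ((x - y) / y <= Rabs (x - y) / m).
    { unfold Rdiv. apply Rle_trans with (Rabs (x - y) * / y).
      - apply Rmult_le_compat_r; [left; apply Rinv_0_lt_compat; lra| apply Rle_abs].
      - apply Rmult_le_compat_l; [apply Rabs_pos|apply Rinv_le_contravar; lra]. }
    lra. }
  apply Rabs_le. split.
  - pose proof (L b a Hb Ha). rewrite <- Rabs_Ropp in H.
    replace (- (b - a)) with (a - b) in H by ring. lra.
  - apply L; auto.
Qed.

Lemma Rpower_pos x d : 0 < Rpower x d.
Proof. unfold Rpower; apply exp_pos. Qed.

Lemma Rpower_le1 x d : 0 < x <= 1 -> 0 <= d -> Rpower x d <= 1.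
Proof.
  intros [H0 H1] Hd. unfold Rpower. rewrite <- exp_0. apply exp_le.
  assert (ln x <= 0) by (rewrite <- ln_1; apply ln_le; lra). nra.
Qed.

Lemma Rpower_ge x d : 0 < x <= 1 -> 0 <= d <= 1 -> x <= Rpower x d.
Proof.
  intros [H0 H1] Hd. unfold Rpower. rewrite <- (exp_ln x) at 1 by auto. apply exp_le.
  assert (ln x <= 0) by (rewrite <- ln_1; apply ln_le; lra). nra.
Qed.

Lemma dist_I_pos t1 t2 : I t1 -> I t2 -> t1 <> t2 -> 0 < Rabs (t2 - t1) <= 1.
Proof.
  unfold I; intros H1 H2 Hne. split; [apply Rabs_pos_lt; lra|].
  apply Rabs_le; lra.
Qed.

Section Holder.
Variable d : R.

Definition holder (u : R -> R) K := forall t1 t2, I t1 -> I t2 -> t1 <> t2 ->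
  Rabs (u t2 - u t1) <= K * Rpower (Rabs (t2 - t1)) d.

Definition holder_sup u := Rsup (holder_set d u).

Lemma holder_const_ge0 u K : holder u K -> 0 <= K.
Proof.
  intros H. specialize (H 0 1). unfold I in H.
  assert (A := H ltac:(lra) ltac:(lra) ltac:(lra)).
  pose proof (Rpower_pos (Rabs (1 - 0)) d). pose proof (Rabs_pos (u 1 - u 0)).
  destruct (Rle_dec 0 K); auto. nra.
Qed.

Lemma holder_bound_holder_set u K r : holder u K -> holder_set d u r -> r <= K.
Proof.
  intros H [t1 [t2 [I1 [I2 [Hne ->]]]]].
  pose proof (Rpower_pos (Rabs (t2 - t1)) d). specialize (H t1 t2 I1 I2 Hne).
  apply (Rmult_le_reg_r (Rpower (Rabs (t2 - t1)) d)); auto.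
  unfold Rdiv. rewrite Rmult_assoc, Rinv_l by lra. lra.
Qed.

Lemma holder_sup_lub u K : holder u K -> is_lub (holder_set d u) (holder_sup u).
Proof.
  intros H. unfold holder_sup, Rsup. apply epsilon_spec.
  destruct (completeness (holder_set d u)) as [m Hm].
  - exists K. intros r Hr. exact (holder_bound_holder_set u K r H Hr).
  - exists (Rabs (u 1 - u 0) / Rpower (Rabs (1 - 0)) d); exists 0, 1; unfold I; repeat split; lra.
  - exists m; auto.
Qed.

Lemma holder_sup_le u K : holder u K -> holder_sup u <= K.
Proof.
  intros H. apply (holder_sup_lub u K H). intros r Hr. exact (holder_bound_holder_set u K r H Hr).
Qed.

Lemma holder_sup_holder u K : holder u K -> holder u (holder_sup u).
Proof.
  intros H t1 t2 I1 I2 Hne. destruct (holder_sup_lub u K H) as [Hu _].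
  assert (Hr : holder_set d u (Rabs (u t2 - u t1) / Rpower (Rabs (t2 - t1)) d))
    by (exists t1, t2; auto).
  specialize (Hu _ Hr). pose proof (Rpower_pos (Rabs (t2 - t1)) d).
  apply (Rmult_le_compat_r (Rpower (Rabs (t2 - t1)) d)) in Hu; [|lra].
  unfold Rdiv in Hu. rewrite Rmult_assoc, Rinv_l in Hu by lra. lra.
Qed.

Lemma holder_sup_ge0 u K : holder u K -> 0 <= holder_sup u.
Proof. intros H. apply (holder_const_ge0 u). apply (holder_sup_holder u K H). Qed.

Lemma holder_ext u v K : (forall t, I t -> u t = v t) -> holder u K -> holder v K.
Proof. intros E H t1 t2 I1 I2 Hne. rewrite <- !E by auto. auto. Qed.

Lemma holder_set_ext u v : (forall t, I t -> u t = v t) -> holder_set d u = holder_set d v.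
Proof.
  intros E. apply functional_extensionality. intros r. apply propositional_extensionality.
  split; intros [t1 [t2 [I1 [I2 [Hne Hr]]]]]; exists t1, t2;
    (split; [auto|split;[auto|split;[auto|]]]); rewrite Hr; rewrite !E by auto; reflexivity.
Qed.

Lemma holder_le u K K' : K <= K' -> holder u K -> holder u K'.
Proof.
  intros Hk H t1 t2 I1 I2 Hne. specialize (H t1 t2 I1 I2 Hne).
  pose proof (Rpower_pos (Rabs (t2 - t1)) d). nra.
Qed.

Lemma holder_cst c : holder (fun _ => c) 0.
Proof. intros t1 t2 _ _ _. replace (c - c) with 0 by ring. rewrite Rabs_R0. lra. Qed.

Lemma holder_add u v Ku Kv :
  holder u Ku -> holder v Kv -> holder (fun t => u t + v t) (Ku + Kv).
Proof.
  intros Hu Hv t1 t2 I1 I2 Hne. specialize (Hu t1 t2 I1 I2 Hne). specialize (Hv t1 t2 I1 I2 Hne).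
  replace (u t2 + v t2 - (u t1 + v t1)) with ((u t2 - u t1) + (v t2 - v t1)) by ring.
  eapply Rle_trans; [apply Rabs_triang|]. lra.
Qed.

Lemma holder_opp u K : holder u K -> holder (fun t => - u t) K.
Proof.
  intros Hu t1 t2 I1 I2 Hne. specialize (Hu t1 t2 I1 I2 Hne).
  replace (- u t2 - - u t1) with (- (u t2 - u t1)) by ring. rewrite Rabs_Ropp; auto.
Qed.

Lemma holder_sub u v Ku Kv :
  holder u Ku -> holder v Kv -> holder (fun t => u t - v t) (Ku + Kv).
Proof. intros Hu Hv. apply (holder_add u (fun t => - v t)); auto. apply holder_opp; auto. Qed.

Lemma holder_mul u v Ku Kv Bu Bv : holder u Ku -> holder v Kv ->
  (forall t, I t -> Rabs (u t) <= Bu) -> (forall t, I t -> Rabs (v t) <= Bv) ->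
  holder (fun t => u t * v t) (Bu * Kv + Ku * Bv).
Proof.
  intros Hu Hv HBu HBv t1 t2 I1 I2 Hne.
  specialize (Hu t1 t2 I1 I2 Hne). specialize (Hv t1 t2 I1 I2 Hne).
  replace (u t2 * v t2 - u t1 * v t1) with (u t2 * (v t2 - v t1) + (u t2 - u t1) * v t1) by ring.
  eapply Rle_trans; [apply Rabs_triang|]. rewrite !Rabs_mult.
  pose proof (HBu t2 I2). pose proof (HBv t1 I1).
  pose proof (Rabs_pos (u t2)). pose proof (Rabs_pos (v t1)).
  pose proof (Rabs_pos (v t2 - v t1)). pose proof (Rabs_pos (u t2 - u t1)).
  set (P := Rpower (Rabs (t2 - t1)) d) in *.
  assert (Rabs (u t2) * Rabs (v t2 - v t1) <= Bu * (Kv * P)) by (apply Rmult_le_compat; auto).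
  assert (Rabs (u t2 - u t1) * Rabs (v t1) <= (Ku * P) * Bv) by (apply Rmult_le_compat; auto).
  nra.
Qed.

Lemma holder_ln u K m : 0 < m -> (forall t, I t -> m <= u t) -> holder u K ->
  holder (fun t => ln (u t)) (K / m).
Proof.
  intros Hm Hu H t1 t2 I1 I2 Hne. eapply Rle_trans; [apply (ln_lipschitz _ _ m); auto|].
  specialize (H t1 t2 I1 I2 Hne). unfold Rdiv.
  replace (K * / m * Rpower (Rabs (t2 - t1)) d) with ((K * Rpower (Rabs (t2 - t1)) d) * / m) by ring.
  apply Rmult_le_compat_r; auto. left; apply Rinv_0_lt_compat; auto.
Qed.

Lemma holder_inv u K m : 0 < m -> (forall t, I t -> m <= u t) -> holder u K ->
  holder (fun t => / u t) (K / (m * m)).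
Proof.
  intros Hm Hu H t1 t2 I1 I2 Hne. specialize (H t1 t2 I1 I2 Hne).
  pose proof (Hu t1 I1). pose proof (Hu t2 I2).
  replace (/ u t2 - / u t1) with ((u t1 - u t2) * / (u t1 * u t2)) by (field; lra).
  rewrite Rabs_mult. rewrite <- Rabs_Ropp. replace (- (u t1 - u t2)) with (u t2 - u t1) by ring.
  rewrite (Rabs_right (/ _)) by (left; apply Rinv_0_lt_compat; nra).
  assert (/ (u t1 * u t2) <= / (m * m)) by (apply Rinv_le_contravar; nra).
  assert (0 < / (m * m)) by (apply Rinv_0_lt_compat; nra).
  pose proof (Rabs_pos (u t2 - u t1)). pose proof (Rpower_pos (Rabs (t2 - t1)) d).
  unfold Rdiv. apply Rle_trans with (K * Rpower (Rabs (t2 - t1)) d * / (m * m)).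
  - apply Rmult_le_compat; auto. left; apply Rinv_0_lt_compat; nra.
  - nra.
Qed.

Lemma holder_of_lipschitz u L : 0 <= d <= 1 -> lipschitzI u L -> holder u L.
Proof.
  intros Hd H t1 t2 I1 I2 Hne.
  assert (HL : 0 <= L).
  { specialize (H 0 1). unfold I in H. specialize (H ltac:(lra) ltac:(lra)).
    replace (1 - 0) with 1 in H by ring. rewrite Rabs_R1 in H. pose proof (Rabs_pos (u 1 - u 0)). lra. }
  eapply Rle_trans; [apply H; auto|].
  apply Rmult_le_compat_l; auto. apply Rpower_ge; auto. apply dist_I_pos; auto.
Qed.

Lemma holder_abs_bound u K : 0 <= d -> holder u K -> forall t, I t -> Rabs (u t) <= Rabs (u 0) + K.
Proof.
  intros Hd H t It. pose proof (holder_const_ge0 u K H) as HK.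
  destruct (Req_dec t 0) as [->|Hne]; [lra|].
  assert (I0 : I 0) by (unfold I; lra).
  specialize (H 0 t I0 It (not_eq_sym Hne)).
  pose proof (Rpower_le1 (Rabs (t - 0)) d (dist_I_pos 0 t I0 It (not_eq_sym Hne)) Hd).
  replace (u t) with (u 0 + (u t - u 0)) by ring.
  eapply Rle_trans; [apply Rabs_triang|]. nra.
Qed.

Lemma holder_sup_abs_sub_le u v Ku Kv K : holder u Ku -> holder v Kv ->
  holder (fun t => v t - u t) K -> Rabs (holder_sup v - holder_sup u) <= K.
Proof.
  intros Hu Hv H.
  assert (Hvu : holder_sup v <= holder_sup u + K).
  { apply (holder_sup_le v). apply (holder_ext (fun t => u t + (v t - u t))); [intros; ring|].
    apply holder_add; auto. apply (holder_sup_holder u Ku Hu). }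
  assert (Huv : holder_sup u <= holder_sup v + K).
  { apply (holder_sup_le u). apply (holder_ext (fun t => v t + - (v t - u t))); [intros; ring|].
    apply holder_add; [apply (holder_sup_holder v Kv Hv)|apply holder_opp; auto]. }
  apply Rabs_le. lra.
Qed.

(** [pnorm (derI f)] is [p_delta d f]. *)
Definition pnorm (u : R -> R) := Rabs (ln (u 0)) + holder_sup (fun t => ln (u t)).

Lemma pnorm_ext u v : (forall t, I t -> u t = v t) -> pnorm u = pnorm v.
Proof.
  intros E. unfold pnorm, holder_sup. assert (I0 : I 0) by (unfold I; lra). rewrite (E 0 I0).
  rewrite (holder_set_ext (fun t => ln (u t)) (fun t => ln (v t))); auto.
  intros t It; rewrite E; auto.
Qed.

(** [ln v - ln u = ln (1 + (v - u) / u)] *)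
Lemma holder_ln_sub u v m Mu Ku E Ke : 0 < m -> (forall t, I t -> m <= u t <= Mu) -> holder u Ku ->
  (forall t, I t -> Rabs (v t - u t) <= E) -> holder (fun t => v t - u t) Ke -> E <= m / 2 ->
  holder (fun t => ln (v t) - ln (u t)) ((E * (Ku / (m * m)) + Ke * / m) * (2 * Mu / m)).
Proof.
  intros Hm Hu HBu Hvu HBvu HE.
  assert (Hv : forall t, I t -> m / 2 <= v t).
  { intros t It. specialize (Hvu t It). specialize (Hu t It). apply Rabs_le_inv in Hvu. lra. }
  assert (Hmu : m <= Mu) by (assert (I0 : I 0) by (unfold I; lra); pose proof (Hu 0 I0); lra).
  set (Kw := E * (Ku / (m * m)) + Ke * / m).
  assert (HBw : holder (fun t => v t / u t) Kw).
  { apply (holder_ext (fun t => 1 + (v t - u t) * / u t)).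
    { intros t It. pose proof (Hu t It). field. lra. }
    replace Kw with (0 + Kw) by ring. apply holder_add; [apply holder_cst|].
    apply holder_mul; auto.
    - apply holder_inv; auto. intros t It; apply Hu; auto.
    - intros t It. pose proof (Hu t It). rewrite Rabs_right by (left; apply Rinv_0_lt_compat; lra).
      apply Rinv_le_contravar; lra. }
  assert (Hq : forall t, I t -> (m / 2) / Mu <= v t / u t).
  { intros t It. pose proof (Hu t It). pose proof (Hv t It). unfold Rdiv.
    apply Rmult_le_compat; try lra. left; apply Rinv_0_lt_compat; lra. apply Rinv_le_contravar; lra. }
  replace (Kw * (2 * Mu / m)) with (Kw / ((m / 2) / Mu)) by (field; lra).
  apply (holder_ext (fun t => ln (v t / u t))).
  { intros t It. pose proof (Hu t It). pose proof (Hv t It). unfold Rdiv.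
    rewrite ln_mult, ln_Rinv by (try apply Rinv_0_lt_compat; lra). ring. }
  apply holder_ln; auto. apply Rdiv_lt_0_compat; lra.
Qed.

Lemma pnorm_diff_le u v m Mu Ku E Ke : 0 < m -> (forall t, I t -> m <= u t <= Mu) -> holder u Ku ->
  (forall t, I t -> Rabs (v t - u t) <= E) -> holder (fun t => v t - u t) Ke -> E <= m / 2 ->
  Rabs (pnorm v - pnorm u) <= 2 * E / m + (E * (Ku / (m * m)) + Ke * / m) * (2 * Mu / m).
Proof.
  intros Hm Hu HBu Hvu HBvu HE.
  assert (I0 : I 0) by (unfold I; lra).
  assert (Hv : forall t, I t -> m / 2 <= v t).
  { intros t It. specialize (Hvu t It). specialize (Hu t It). apply Rabs_le_inv in Hvu. lra. }
  assert (HBv : holder v (Ku + Ke)).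
  { apply (holder_ext (fun t => u t + (v t - u t))); [intros; ring|]. apply holder_add; auto. }
  assert (Hsup := holder_sup_abs_sub_le _ _ _ _ _
    (holder_ln u Ku m Hm (fun t It => proj1 (Hu t It)) HBu)
    (holder_ln v (Ku + Ke) (m / 2) ltac:(lra) Hv HBv)
    (holder_ln_sub u v m Mu Ku E Ke Hm Hu HBu Hvu HBvu HE)).
  assert (H0 : Rabs (ln (v 0) - ln (u 0)) <= 2 * E / m).
  { eapply Rle_trans; [apply (ln_lipschitz _ _ (m/2)); try lra; [apply Hv; auto| pose proof (Hu 0 I0); lra]|].
    specialize (Hvu 0 I0). unfold Rdiv.
    replace (2 * E * / m) with (E * / (m / 2)) by (field; lra).
    apply Rmult_le_compat_r; auto. left; apply Rinv_0_lt_compat; lra. }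
  unfold pnorm.
  pose proof (Rabs_triang_inv2 (ln (v 0)) (ln (u 0))).
  set (sv := holder_sup (fun t => ln (v t))) in *. set (su := holder_sup (fun t => ln (u t))) in *.
  replace (Rabs (ln (v 0)) + sv - (Rabs (ln (u 0)) + su))
    with ((Rabs (ln (v 0)) - Rabs (ln (u 0))) + (sv - su)) by ring.
  eapply Rle_trans; [apply Rabs_triang|]. lra.
Qed.

End Holder.

Definition C1I f := (forall x, I x -> has_derI_lin f x (derI f x)) /\ contI (derI f).

Lemma is_Ck_C1I k f j : is_Ck k f -> (j < k)%nat -> C1I (derIn j f).
Proof.
  intros [Hd Hc] Hj. split.
  - intros x Ix. exact (has_derI_to_lin _ _ _ (Hd j Hj x Ix)).
  - destruct (Nat.eq_dec (S j) k) as [<-|Hne]; [exact Hc|].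
    apply (contI_of_has_derI_lin _ (derIn (S (S j)) f)).
    intros x Ix. exact (has_derI_to_lin _ _ _ (Hd (S j) ltac:(lia) x Ix)).
Qed.

(** [f' <> 0] since [(g o f)' = 1]; by the IVT [f'] has constant sign, and the
    MVT on [[0, 1]] makes it positive. *)
Lemma derI_pos_of_inv f g : C1I f -> C1I g -> inv_on_I f g -> f 0 = 0 -> f 1 = 1 ->
  forall x, I x -> 0 < derI f x.
Proof.
  intros [Df Cf] [Dg Cg] [Mf [Mg Hfg]] H0 H1.
  assert (Hnz : forall x, I x -> derI f x <> 0).
  { intros x Ix Hz.
    assert (A := has_derI_lin_comp f g x _ _ Mf Ix (Df x Ix) (Dg (f x) (Mf x Ix))).
    assert (B : has_derI_lin (fun y => g (f y)) x 1).
    { apply (has_derI_lin_ext (fun y => y)); auto; [|apply has_derI_lin_id].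
      intros y Iy. symmetry; apply Hfg; auto. }
    assert (E := has_derI_lin_unique _ _ _ _ Ix A B). rewrite Hz in E. lra. }
  intros x Ix. destruct (Rlt_dec 0 (derI f x)) as [|Hn]; auto. exfalso.
  assert (Hneg : derI f x < 0) by (specialize (Hnz x Ix); lra).
  destruct (classic (exists x1, I x1 /\ 0 < derI f x1)) as [[x1 [I1 Hp]]|Hno].
  - destruct (Rtotal_order x x1) as [Hlt|[Heq|Hgt]].
    + destruct (IVT_I (derI f) Cf x x1 Ix I1 Hlt Hneg Hp) as [c [Ic Hc]]. apply (Hnz c Ic Hc).
    + subst; lra.
    + destruct (IVT_I (fun y => - derI f y) (contI_opp _ Cf) x1 x I1 Ix Hgt) as [c [Ic Hc]]; try lra.
      apply (Hnz c Ic). lra.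
  - assert (I0 : I 0) by (unfold I; lra). assert (I1 : I 1) by (unfold I; lra).
    destruct (MVT_I f (derI f) 0 1 Df I0 I1 ltac:(lra)) as [c [Hc E]].
    assert (Ic : I c) by (unfold I; lra).
    assert (derI f c <= 0)
      by (destruct (Rle_dec (derI f c) 0); auto; exfalso; apply Hno; exists c; split; auto; lra).
    rewrite H0, H1 in E. lra.
Qed.

Lemma Diff1p_data f : Diff1p f -> C1I f /\ maps_I f /\ f 0 = 0 /\
  (exists g, inv_on_I f g /\ C1I g) /\ (forall x, I x -> 0 < derI f x).
Proof.
  intros [[Hf [g [Hinv Hg]]] [H0 H1]].
  apply (is_Ck_C1I 1 _ 0) in Hf, Hg; auto.
  split; auto. split; [apply Hinv|]. split; auto. split; [exists g; auto|].
  apply (derI_pos_of_inv f g); auto.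
Qed.

Definition C3I_pos k :=
  C1I k /\ C1I (derI k) /\ C1I (derI (derI k)) /\ maps_I k /\ (forall x, I x -> 0 < derI k x).

Lemma Diff03_data k : Diff03 k -> C3I_pos k /\ derI k 0 = 1.
Proof.
  intros [[Hk [g [Hinv Hg]]] [H0 [H1 [D0 D1]]]].
  pose proof (is_Ck_C1I 3 k 0 Hk ltac:(lia)) as Ck.
  pose proof (is_Ck_C1I 3 g 0 Hg ltac:(lia)) as Cg.
  split; [|exact D0].
  split; [exact Ck|]. split; [exact (is_Ck_C1I 3 k 1 Hk ltac:(lia))|].
  split; [exact (is_Ck_C1I 3 k 2 Hk ltac:(lia))|]. split; [apply Hinv|].
  apply (derI_pos_of_inv k g); auto.
Qed.

Lemma Diff03_C3I_pos k : Diff03 k -> C3I_pos k.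
Proof. intros H. apply (Diff03_data k H). Qed.

Lemma Diff1d_data d f : Diff1d d f -> C1I f /\ maps_I f /\ f 0 = 0 /\
  (exists g, inv_on_I f g /\ C1I g) /\ (forall x, I x -> 0 < derI f x) /\ exists K, holder d (derI f) K.
Proof.
  intros [Hp [_ [_ [K HK]]]]. destruct (Diff1p_data f Hp) as [A [B [C [D E]]]].
  repeat (split; auto). exists K. exact HK.
Qed.

Lemma derI_bounds d f : 0 <= d -> Diff1d d f -> exists m Mf Kf, 0 < m /\ 0 <= Kf /\
  (forall t, I t -> m <= derI f t <= Mf) /\ holder d (derI f) Kf.
Proof.
  intros Hd Hf. destruct (Diff1d_data d f Hf) as [[Df Cf] [_ [_ [_ [Hpos [K HK]]]]]].
  destruct (contI_attains_min (derI f) Cf) as [x0 [Ix0 Hx0]].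
  exists (derI f x0), (Rabs (derI f 0) + K), K.
  split; [apply Hpos; auto|]. split; [apply (holder_const_ge0 d _ _ HK)|]. split; auto.
  intros t It. split; auto.
  pose proof (holder_abs_bound d _ _ Hd HK t It). pose proof (Rle_abs (derI f t)). lra.
Qed.

Lemma norm1d_sub_bounds d f g : 0 <= d -> Diff1d d f -> Diff1d d g ->
  (forall t, I t -> Rabs (derI g t - derI f t) <= norm1d d (fun x => g x - f x)) /\
  holder d (fun t => derI g t - derI f t) (norm1d d (fun x => g x - f x)) /\
  (forall t, I t -> Rabs (g t - f t) <= norm1d d (fun x => g x - f x)) /\
  0 <= norm1d d (fun x => g x - f x).
Proof.
  intros Hd Hf Hg.
  destruct (Diff1d_data d f Hf) as [[Df Cf] [_ [f0 [_ [_ [Kf HKf]]]]]].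
  destruct (Diff1d_data d g Hg) as [[Dg Cg] [_ [g0 [_ [_ [Kg HKg]]]]]].
  set (D := derI (fun x => g x - f x)).
  assert (HD : forall t, I t -> D t = derI g t - derI f t).
  { intros t It. apply derI_eq_lin; auto. apply has_derI_lin_sub; auto. }
  assert (HBD : holder d D (Kg + Kf)).
  { apply (holder_ext d (fun t => derI g t - derI f t)); [intros; symmetry; auto|].
    apply holder_sub; auto. }
  pose proof (holder_sup_holder d D _ HBD) as HBD'. pose proof (holder_sup_ge0 d D _ HBD) as Hs0.
  assert (EN : norm1d d (fun x => g x - f x) = Rabs (D 0) + holder_sup d D) by reflexivity.
  rewrite EN. pose proof (Rabs_pos (D 0)).
  assert (Hb : forall t, I t -> Rabs (derI g t - derI f t) <= Rabs (D 0) + holder_sup d D).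
  { intros t It. rewrite <- HD by auto. apply (holder_abs_bound d D _ Hd HBD'); auto. }
  split; auto. split.
  { apply (holder_ext d D); auto. apply (holder_le d D (holder_sup d D)); auto. lra. }
  split; [|lra].
  intros t It. assert (I0 : I 0) by (unfold I; lra).
  pose proof (lipschitz_of_deriv_bound (fun x => g x - f x) (fun t => derI g t - derI f t) _
     (fun x Ix => has_derI_lin_sub _ _ _ _ _ (Dg x Ix) (Df x Ix)) Hb 0 t I0 It) as L.
  simpl in L. rewrite f0, g0 in L. replace (g t - f t - (0 - 0)) with (g t - f t) in L by ring.
  eapply Rle_trans; [apply L|]. replace (t - 0) with t by ring.
  destruct It. rewrite (Rabs_right t) by lra.
  rewrite <- (Rmult_1_r (Rabs (D 0) + holder_sup d D)) at 2. apply Rmult_le_compat_l; lra.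
Qed.

Lemma C3I_pos_bounds k : C3I_pos k -> exists mk M1 M2 M3, 0 < mk /\ 0 <= M2 /\ 0 <= M3 /\
  (forall x, I x -> mk <= derI k x <= M1) /\
  (forall x, I x -> Rabs (derI (derI k) x) <= M2) /\
  lipschitzI (derI k) M2 /\ lipschitzI (derI (derI k)) M3.
Proof.
  intros [[D0 C0] [[D1 C1'] [[D2 C2] [Mk Hpos]]]].
  destruct (contI_attains_min (derI k) C0) as [x0 [Ix0 Hx0]].
  destruct (contI_bounded (derI k) C0) as [M1 HM1].
  destruct (contI_bounded (derI (derI k)) C1') as [M2 HM2].
  destruct (contI_bounded (derI (derI (derI k))) C2) as [M3 HM3].
  assert (I0 : I 0) by (unfold I; lra).
  exists (derI k x0), M1, M2, M3. split; [apply Hpos; auto|].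
  split; [pose proof (HM2 0 I0); pose proof (Rabs_pos (derI (derI k) 0)); lra|].
  split; [pose proof (HM3 0 I0); pose proof (Rabs_pos (derI (derI (derI k)) 0)); lra|].
  split. { intros x Ix. split; auto. pose proof (HM1 x Ix). pose proof (Rle_abs (derI k x)). lra. }
  split; auto. split.
  - apply (lipschitz_of_deriv_bound _ (derI (derI k))); auto.
  - apply (lipschitz_of_deriv_bound _ (derI (derI (derI k)))); auto.
Qed.

Lemma derI_comp k g : C3I_pos k -> C1I g -> maps_I g -> forall t, I t ->
  has_derI_lin (fun x => k (g x)) t (derI k (g t) * derI g t) /\
  derI (fun x => k (g x)) t = derI k (g t) * derI g t.
Proof.
  intros [[D0 _] _] [Dg _] Mg t It.
  assert (H : has_derI_lin (fun x => k (g x)) t (derI k (g t) * derI g t))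
    by (apply has_derI_lin_comp; auto).
  split; auto. apply derI_eq_lin; auto.
Qed.

Lemma lipschitzI_comp u L g Lg : lipschitzI u L -> 0 <= L -> maps_I g -> lipschitzI g Lg ->
  lipschitzI (fun t => u (g t)) (L * Lg).
Proof.
  intros Hu HL Mg Hg t1 t2 I1 I2. eapply Rle_trans; [apply Hu; auto|].
  rewrite Rmult_assoc. apply Rmult_le_compat_l; auto.
Qed.

Lemma lipschitzI_Diff1d d g Mg : Diff1d d g -> (forall t, I t -> derI g t <= Mg) -> lipschitzI g Mg.
Proof.
  intros Hg HM. destruct (Diff1d_data d g Hg) as [[Dg _] [_ [_ [_ [Hpos _]]]]].
  apply (lipschitz_of_deriv_bound g (derI g)); auto.
  intros x Ix. pose proof (Hpos x Ix). pose proof (HM x Ix). rewrite Rabs_right; lra.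
Qed.

Lemma derI_comp_bounds d k g : 0 < d <= 1 -> C3I_pos k -> Diff1d d g -> exists m Mu Ku, 0 < m /\
  (forall t, I t -> m <= derI (fun x => k (g x)) t <= Mu) /\ holder d (derI (fun x => k (g x))) Ku.
Proof.
  intros Hd Hk Hg.
  destruct (C3I_pos_bounds k Hk) as [mk [M1 [M2 [M3 [Hmk [HM2 [HM3 [Hk1 [Hk2 [L2 L3]]]]]]]]]].
  destruct (derI_bounds d g ltac:(lra) Hg) as [mg [Mg [Kg [Hmg [HKg0 [Hbg HKg]]]]]].
  destruct (Diff1d_data d g Hg) as [Cg [Mgi _]].
  exists (mk * mg), (M1 * Mg), (M1 * Kg + (M2 * Mg) * Mg). split; [nra|]. split.
  - intros t It. rewrite (proj2 (derI_comp k g Hk Cg Mgi t It)).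
    pose proof (Hk1 (g t) (Mgi t It)). pose proof (Hbg t It). split; apply Rmult_le_compat; nra.
  - apply (holder_ext d (fun t => derI k (g t) * derI g t)).
    { intros t It. symmetry. apply (proj2 (derI_comp k g Hk Cg Mgi t It)). }
    apply holder_mul; auto.
    + assert (I0 : I 0) by (unfold I; lra). pose proof (Hbg 0 I0).
      apply holder_of_lipschitz; [lra|]. apply lipschitzI_comp; auto.
      apply (lipschitzI_Diff1d d); auto. intros; apply Hbg; auto.
    + intros t It. pose proof (Hk1 (g t) (Mgi t It)). rewrite Rabs_right; lra.
    + intros t It. pose proof (Hbg t It). rewrite Rabs_right; lra.
Qed.

(** Both continuity statements reduce to this: a perturbation of size [N] of
    a positive Hölder function changes it by [O(N)] in sup and Hölder norm. *)
Lemma pnorm_cont_of_linear_bounds {T} d (P : T -> Prop) (F : T -> R -> R) (dist : T -> R)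
    (u : R -> R) m Mu Ku a b :
  0 < m -> 0 < a -> 0 <= b -> (forall t, I t -> m <= u t <= Mu) -> holder d u Ku ->
  (forall g, P g -> 0 <= dist g) ->
  (forall g, P g -> dist g <= 1 ->
     (forall t, I t -> Rabs (F g t - u t) <= dist g * a) /\
     holder d (fun t => F g t - u t) (dist g * b)) ->
  forall eps, 0 < eps -> exists eta, 0 < eta /\
    forall g, P g -> dist g < eta -> Rabs (pnorm d (F g) - pnorm d u) < eps.
Proof.
  intros Hm Ha Hb Hu HBu Hdist Hlin eps Heps.
  assert (I0 : I 0) by (unfold I; lra).
  assert (HMu : 0 < Mu) by (pose proof (Hu 0 I0); lra).
  assert (HKu : 0 <= Ku) by exact (holder_const_ge0 d u Ku HBu).
  set (C := 2 * a / m + (a * (Ku / (m * m)) + b * / m) * (2 * Mu / m)).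
  assert (HC : 0 <= C).
  { unfold C, Rdiv. assert (0 < / m) by (apply Rinv_0_lt_compat; lra).
    assert (0 < / (m * m)) by (apply Rinv_0_lt_compat; nra).
    repeat first [apply Rplus_le_le_0_compat | apply Rmult_le_pos]; lra. }
  exists (Rmin 1 (Rmin (m / (2 * a)) (eps / (C + 1)))). split.
  { repeat apply Rmin_case; try lra; apply Rdiv_lt_0_compat; lra. }
  intros g Pg HN. pose proof (Hdist g Pg) as N0.
  apply Rmin_Rgt in HN as [N1 [N2 N3]%Rmin_Rgt].
  destruct (Hlin g Pg ltac:(lra)) as [HE HKe]. set (N := dist g) in *.
  assert (HEm : N * a <= m / 2).
  { apply (Rmult_lt_compat_r a) in N2; [|lra]. unfold Rdiv in N2 |- *.
    replace (m * / (2 * a) * a) with (m * / 2) in N2 by (field; lra). lra. }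
  eapply Rle_lt_trans; [apply (pnorm_diff_le d u (F g) m Mu Ku (N * a) (N * b)); auto|].
  replace (2 * (N * a) / m + (N * a * (Ku / (m * m)) + N * b * / m) * (2 * Mu / m))
    with (N * C) by (unfold C; field; lra).
  apply Rle_lt_trans with (eps / (C + 1) * C); [apply Rmult_le_compat_r; lra|].
  apply (Rmult_lt_reg_r (C + 1)); [lra|]. unfold Rdiv.
  replace (eps * / (C + 1) * C * (C + 1)) with (eps * C) by (field; lra). nra.
Qed.

Lemma p_delta_cont d : 0 < d <= 1 -> cont_Diff1d d (p_delta d).
Proof.
  intros Hd f Hf.
  destruct (derI_bounds d f ltac:(lra) Hf) as [m [Mf [Kf [Hm [_ [Hb HKf]]]]]].
  apply (pnorm_cont_of_linear_bounds d (Diff1d d) derI (fun g => norm1d d (fun x => g x - f x))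
           (derI f) m Mf Kf 1 1); auto; try lra.
  - intros g Hg. apply (norm1d_sub_bounds d f g); auto; lra.
  - intros g Hg _. rewrite !Rmult_1_r.
    destruct (norm1d_sub_bounds d f g ltac:(lra) Hf Hg) as [Hsup [Hhol _]]; auto.
Qed.

Lemma lipschitzI_comp_sub h h' f g M2 M3 Mf N :
  (forall x, I x -> has_derI_lin h x (h' x)) -> (forall x, I x -> Rabs (h' x) <= M2) ->
  lipschitzI h' M3 -> 0 <= M3 ->
  C1I f -> C1I g -> maps_I f -> maps_I g -> (forall t, I t -> 0 <= derI f t <= Mf) ->
  (forall t, I t -> Rabs (derI g t - derI f t) <= N) -> (forall t, I t -> Rabs (g t - f t) <= N) ->
  lipschitzI (fun y => h (g y) - h (f y)) (N * (M2 + M3 * Mf)).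
Proof.
  intros Dh Bh Lh HM3 [Df _] [Dg _] Mf' Mg' Bf Ngf' Ngf.
  set (w := fun t => h' (g t) * derI g t - h' (f t) * derI f t).
  apply (lipschitz_of_deriv_bound _ w).
  { intros t It. apply has_derI_lin_sub; apply has_derI_lin_comp; auto. }
  intros t It. unfold w.
  replace (h' (g t) * derI g t - h' (f t) * derI f t) with
    (h' (g t) * (derI g t - derI f t) + (h' (g t) - h' (f t)) * derI f t) by ring.
  eapply Rle_trans; [apply Rabs_triang|]. rewrite !Rabs_mult.
  pose proof (Bh (g t) (Mg' t It)). pose proof (Ngf' t It). pose proof (Bf t It).
  assert (Rabs (h' (g t) - h' (f t)) <= M3 * N).
  { eapply Rle_trans; [apply Lh; auto|]. apply Rmult_le_compat_l; auto. }
  rewrite (Rabs_right (derI f t)) by lra.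
  pose proof (Rabs_pos (h' (g t))). pose proof (Rabs_pos (derI g t - derI f t)).
  pose proof (Rabs_pos (h' (g t) - h' (f t))).
  assert (Rabs (h' (g t)) * Rabs (derI g t - derI f t) <= M2 * N) by (apply Rmult_le_compat; auto).
  assert (Rabs (h' (g t) - h' (f t)) * derI f t <= (M3 * N) * Mf) by (apply Rmult_le_compat; lra).
  nra.
Qed.

(** The chain rule [(k o g)' = k' o g * g'] makes [f |-> (k o f)'] locally
    Lipschitz for the sup norm and the Hölder constant. *)
Lemma derI_comp_sub_bounds d k f : 0 < d <= 1 -> C3I_pos k -> Diff1d d f ->
  exists a b, 0 < a /\ 0 <= b /\ forall g, Diff1d d g -> norm1d d (fun x => g x - f x) <= 1 ->
    (forall t, I t -> Rabs (derI (fun x => k (g x)) t - derI (fun x => k (f x)) t)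
                      <= norm1d d (fun x => g x - f x) * a) /\
    holder d (fun t => derI (fun x => k (g x)) t - derI (fun x => k (f x)) t)
             (norm1d d (fun x => g x - f x) * b).
Proof.
  intros Hd Hk Hf.
  destruct (C3I_pos_bounds k Hk) as [mk [M1 [M2 [M3 [Hmk [HM2 [HM3 [Hk1 [Hk2 [L2 L3]]]]]]]]]].
  destruct (derI_bounds d f ltac:(lra) Hf) as [mf [Mf [Kf [Hmf [HKf0 [Hbf HKf]]]]]].
  destruct (Diff1d_data d f Hf) as [C1f [Mfi _]].
  assert (I0 : I 0) by (unfold I; lra).
  assert (HMf : mf <= Mf) by (pose proof (Hbf 0 I0); lra).
  assert (HM1 : mk <= M1) by (pose proof (Hk1 0 I0); lra).
  set (Mg := Mf + 1).
  exists (M1 + M2 * Mf), ((M1 + M2 * Mg) + (M2 * Kf + (M2 + M3 * Mf) * Mf)).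
  split; [nra|]. split; [unfold Mg; nra|].
  intros g Hg N1.
  destruct (norm1d_sub_bounds d f g ltac:(lra) Hf Hg) as [Ne [NHB [Ngf N0]]].
  set (N := norm1d d (fun x => g x - f x)) in *.
  destruct (Diff1d_data d g Hg) as [C1g [Mgi _]].
  assert (Hbg : forall t, I t -> derI g t <= Mg).
  { intros t It. specialize (Ne t It). apply Rabs_le_inv in Ne. pose proof (Hbf t It). unfold Mg; lra. }
  assert (Hlg : lipschitzI g Mg) by (apply (lipschitzI_Diff1d d); auto).
  assert (Hw : forall t, I t -> Rabs (derI k (g t) - derI k (f t)) <= M2 * N).
  { intros t It. eapply Rle_trans; [apply L2; auto|]. apply Rmult_le_compat_l; auto. }
  assert (Lw : lipschitzI (fun y => derI k (g y) - derI k (f y)) (N * (M2 + M3 * Mf))).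
  { destruct Hk as [_ [[Dk1 _] _]].
    apply (lipschitzI_comp_sub _ (derI (derI k))); auto. intros t It; pose proof (Hbf t It); lra. }
  assert (E : forall t, I t -> derI (fun x => k (g x)) t - derI (fun x => k (f x)) t
    = derI k (g t) * (derI g t - derI f t) + (derI k (g t) - derI k (f t)) * derI f t).
  { intros t It. rewrite (proj2 (derI_comp k g Hk C1g Mgi t It)), (proj2 (derI_comp k f Hk C1f Mfi t It)).
    ring. }
  split.
  - intros t It. rewrite E by auto.
    eapply Rle_trans; [apply Rabs_triang|]. rewrite !Rabs_mult.
    pose proof (Hk1 (g t) (Mgi t It)). pose proof (Ne t It). pose proof (Hw t It). pose proof (Hbf t It).
    rewrite (Rabs_right (derI k (g t))) by lra. rewrite (Rabs_right (derI f t)) by lra.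
    pose proof (Rabs_pos (derI g t - derI f t)). pose proof (Rabs_pos (derI k (g t) - derI k (f t))).
    assert (derI k (g t) * Rabs (derI g t - derI f t) <= M1 * N) by (apply Rmult_le_compat; lra).
    assert (Rabs (derI k (g t) - derI k (f t)) * derI f t <= M2 * N * Mf) by (apply Rmult_le_compat; lra).
    nra.
  - apply (holder_ext d (fun t => derI k (g t) * (derI g t - derI f t)
                                  + (derI k (g t) - derI k (f t)) * derI f t)).
    { intros t It. symmetry. auto. }
    replace (N * ((M1 + M2 * Mg) + (M2 * Kf + (M2 + M3 * Mf) * Mf)))
      with ((M1 * N + (M2 * Mg) * N) + ((M2 * N) * Kf + (N * (M2 + M3 * Mf)) * Mf)) by ring.
    apply holder_add; apply holder_mul; auto.
    + apply holder_of_lipschitz; [lra|]. apply lipschitzI_comp; auto.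
    + intros t It. pose proof (Hk1 (g t) (Mgi t It)). rewrite Rabs_right; lra.
    + apply holder_of_lipschitz; [lra|auto].
    + intros t It. pose proof (Hbf t It). rewrite Rabs_right; lra.
Qed.

Lemma p_delta_comp_cont d k f : 0 < d <= 1 -> C3I_pos k -> Diff1d d f ->
  forall eps, 0 < eps -> exists eta, 0 < eta /\
    forall g, Diff1d d g -> norm1d d (fun x => g x - f x) < eta ->
      Rabs (p_delta d (fun x => k (g x)) - p_delta d (fun x => k (f x))) < eps.
Proof.
  intros Hd Hk Hf.
  destruct (derI_comp_bounds d k f Hd Hk Hf) as [m [Mu [Ku [Hm [Hu HBu]]]]].
  destruct (derI_comp_sub_bounds d k f Hd Hk Hf) as [a [b [Ha [Hb Hlin]]]].
  apply (pnorm_cont_of_linear_bounds d (Diff1d d) (fun g => derI (fun x => k (g x)))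
           (fun g => norm1d d (fun x => g x - f x)) _ m Mu Ku a b); auto.
  intros g Hg. apply (norm1d_sub_bounds d f g); auto; lra.
Qed.

Lemma Rinf_glb S : (exists x, S x) -> (exists b, forall r, S r -> b <= r) -> is_glb S (Rinf S).
Proof.
  intros [x Hx] [b Hb]. unfold Rinf. apply epsilon_spec.
  destruct (completeness (fun y => S (- y))) as [m [Hm1 Hm2]].
  - exists (- b). intros y Hy. specialize (Hb _ Hy). lra.
  - exists (- x). rewrite Ropp_involutive. auto.
  - exists (- m). split.
    + intros r Hr. assert (- r <= m) by (apply Hm1; rewrite Ropp_involutive; auto). lra.
    + intros b' Hb'. assert (m <= - b') by (apply Hm2; intros y Hy; specialize (Hb' _ Hy); lra). lra.
Qed.

Lemma glb_approx S m : is_glb S m -> forall eps, 0 < eps -> exists r, S r /\ r < m + eps.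
Proof.
  intros [H1 H2] eps Heps. destruct (classic (exists r, S r /\ r < m + eps)) as [H|H]; auto.
  exfalso. assert (m + eps <= m); [|lra]. apply H2. intros r Hr.
  destruct (Rlt_dec r (m + eps)); [exfalso; apply H; exists r; auto|lra].
Qed.

Lemma Rsup_le S M : (exists x, S x) -> (forall r, S r -> r <= M) -> Rsup S <= M.
Proof.
  intros Hne Hb. assert (H : is_lub S (Rsup S)).
  { unfold Rsup. apply epsilon_spec. destruct (completeness S) as [m Hm]; auto.
    exists M; intros r Hr; auto. exists m; auto. }
  apply H. intros r Hr; auto.
Qed.

Lemma inv_on_I_sym f g : inv_on_I f g -> inv_on_I g f.
Proof. intros [A [B C]]. split; auto. split; auto. intros x Ix. split; apply C; auto. Qed.

Lemma inv_on_I_unique h k1 k2 : inv_on_I h k1 -> inv_on_I h k2 -> same_on_I k1 k2.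
Proof.
  intros [Mh [M1 H1]] [_ [M2 H2]] x Ix.
  destruct (H2 x Ix) as [_ E]. rewrite <- E at 1. apply H1. apply M2; auto.
Qed.

Lemma p_delta_ext d F G F' : (forall t, I t -> F t = G t) -> (forall t, I t -> has_derI_lin F t (F' t)) ->
  p_delta d F = p_delta d G.
Proof.
  intros E H. change (pnorm d (derI F) = pnorm d (derI G)). apply pnorm_ext. intros t It.
  rewrite (derI_eq_lin F t (F' t)) by auto. symmetry. apply derI_eq_lin; auto.
  apply (has_derI_lin_ext F); auto.
Qed.

Lemma p_delta_comp_ext d k k2 f : C3I_pos k -> C1I f -> maps_I f -> same_on_I k k2 ->
  p_delta d (fun x => k (f x)) = p_delta d (fun x => k2 (f x)).
Proof.
  intros Hk Cf Mf E. apply (p_delta_ext d _ _ (fun t => derI k (f t) * derI f t)).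
  - intros t It. apply E. apply Mf; auto.
  - intros t It. apply (derI_comp k f Hk Cf Mf t It).
Qed.

Definition r_set (G : (R -> R) -> Prop) d (f : R -> R) : R -> Prop :=
  fun r => exists h hinv, G h /\ inv_on_I h hinv /\ r = p_delta d (fun x => hinv (f x)).

Lemma r_set_elem G d f r : is_subgroup_Diff03 G -> Diff1d d f -> r_set G d f r ->
  exists k, G k /\ r = p_delta d (fun x => k (f x)).
Proof.
  intros [HG [_ [_ Hinv]]] Hf [h [hinv [Gh [Hi ->]]]].
  destruct (Hinv h Gh) as [k [Gk Hk]]. exists k. split; auto.
  destruct (Diff1d_data d f Hf) as [Cf [Mf _]].
  symmetry. apply (p_delta_ext d _ _ (fun t => derI k (f t) * derI f t)).
  - intros t It. apply (inv_on_I_unique h k hinv); auto.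
  - intros t It. apply (derI_comp k f (Diff03_C3I_pos k (HG k Gk)) Cf Mf t It).
Qed.

Lemma r_set_intro G d f k : is_subgroup_Diff03 G -> G k -> r_set G d f (p_delta d (fun x => k (f x))).
Proof.
  intros [HG [_ [_ Hinv]]] Gk. destruct (Hinv k Gk) as [h [Gh Hh]].
  exists h, k. split; auto. split; auto. apply inv_on_I_sym; auto.
Qed.

Lemma p_delta_comp_ge0 d k f : 0 < d <= 1 -> C3I_pos k -> Diff1d d f -> 0 <= p_delta d (fun x => k (f x)).
Proof.
  intros Hd Hk Hf. destruct (derI_comp_bounds d k f Hd Hk Hf) as [m [Mu [Ku [Hm [Hb HB1]]]]].
  change (0 <= pnorm d (derI (fun x => k (f x)))). unfold pnorm.
  pose proof (Rabs_pos (ln (derI (fun x => k (f x)) 0))).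
  assert (holder d (fun t => ln (derI (fun x => k (f x)) t)) (Ku / m)).
  { apply holder_ln; auto. intros t It; apply Hb; auto. }
  pose proof (holder_sup_ge0 d _ _ H0). lra.
Qed.

Lemma r_delta_glb G d f : 0 < d <= 1 -> is_subgroup_Diff03 G -> Diff1d d f ->
  is_glb (r_set G d f) (r_delta G d f).
Proof.
  intros Hd HG Hf. apply Rinf_glb.
  - destruct (proj1 (proj2 HG)) as [e [Ge _]].
    exists (p_delta d (fun x => e (f x))). apply r_set_intro; auto.
  - exists 0. intros r Hr. destruct (r_set_elem G d f r HG Hf Hr) as [k [Gk ->]].
    apply p_delta_comp_ge0; auto. apply Diff03_C3I_pos. apply HG; auto.
Qed.

Lemma r_delta_ge0 G d f : 0 < d <= 1 -> is_subgroup_Diff03 G -> Diff1d d f -> 0 <= r_delta G d f.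
Proof.
  intros Hd HG Hf. destruct (r_delta_glb G d f Hd HG Hf) as [_ H2]. apply H2.
  intros r Hr. destruct (r_set_elem G d f r HG Hf Hr) as [k [Gk ->]].
  apply p_delta_comp_ge0; auto. apply Diff03_C3I_pos. apply HG; auto.
Qed.

Lemma r_delta_usc G d f : 0 < d <= 1 -> is_subgroup_Diff03 G -> Diff1d d f -> forall eps, 0 < eps ->
  exists eta, 0 < eta /\ forall g, Diff1d d g -> norm1d d (fun x => g x - f x) < eta ->
  r_delta G d g < r_delta G d f + eps.
Proof.
  intros Hd HG Hf eps Heps.
  destruct (glb_approx _ _ (r_delta_glb G d f Hd HG Hf) (eps/2)) as [r [Hr Hrl]]; [lra|].
  destruct (r_set_elem G d f r HG Hf Hr) as [k [Gk ->]].
  assert (Hk : C3I_pos k) by (apply Diff03_C3I_pos; apply HG; auto).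
  destruct (p_delta_comp_cont d k f Hd Hk Hf (eps/2)) as [eta [He Heta]]; [lra|].
  exists eta. split; auto. intros g Hg HN.
  specialize (Heta g Hg HN).
  destruct (r_delta_glb G d g Hd HG Hg) as [Hlow _].
  specialize (Hlow _ (r_set_intro G d g k HG Gk)).
  apply Rlt_le in Heta. apply Rabs_le_inv in Heta as [_ Hx].
  pose proof (Rle_abs (p_delta d (fun x => k (g x)) - p_delta d (fun x => k (f x)))).
  lra.
Qed.

Lemma holder_precomp_inv d phi g ginv K m : 0 <= d -> 0 <= K -> 0 < m -> inv_on_I g ginv ->
  (forall t1 t2, I t1 -> I t2 -> m * Rabs (t2 - t1) <= Rabs (g t2 - g t1)) ->
  holder d (fun t => phi (g t)) K -> holder d phi (K * Rpower (/ m) d).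
Proof.
  intros Hd HK Hm [_ [Mginv Hgg]] Hexp H s1 s2 I1 I2 Hne.
  set (t1 := ginv s1). set (t2 := ginv s2).
  assert (It1 : I t1) by (apply Mginv; auto). assert (It2 : I t2) by (apply Mginv; auto).
  assert (E1 : g t1 = s1) by (apply Hgg; auto). assert (E2 : g t2 = s2) by (apply Hgg; auto).
  assert (Hne' : t1 <> t2) by (intros Heq; apply Hne; rewrite <- E1, <- E2, Heq; auto).
  specialize (H t1 t2 It1 It2 Hne'). cbv beta in H. rewrite E1, E2 in H.
  eapply Rle_trans; [apply H|].
  rewrite Rmult_assoc. apply Rmult_le_compat_l; auto.
  rewrite Rpower_mult_distr; [|apply Rinv_0_lt_compat; lra|apply Rabs_pos_lt; lra].
  apply Rle_Rpower_l; [lra|]. split; [apply Rabs_pos_lt; lra|].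
  specialize (Hexp t1 t2 It1 It2). rewrite E1, E2 in Hexp.
  apply (Rmult_le_reg_l m); [lra|]. rewrite <- Rmult_assoc, Rinv_r, Rmult_1_l; lra.
Qed.

(** A bound [p_delta (k o g) <= M] controls the Hölder constant of [ln k']:
    [ln k' o g = ln (k o g)' - ln g'], and [g^{-1}] is Lipschitz. *)
Lemma holder_ln_derI_bound d k f g mf Mf Kf M : 0 < d <= 1 -> C3I_pos k ->
  Diff1d d f -> Diff1d d g -> 0 < mf ->
  (forall t, I t -> mf <= derI f t <= Mf) -> holder d (derI f) Kf -> 0 <= Kf ->
  norm1d d (fun x => g x - f x) <= 1 -> norm1d d (fun x => g x - f x) <= mf / 2 -> 0 <= M ->
  p_delta d (fun x => k (g x)) <= M ->
  holder d (fun t => ln (derI k t)) ((M + (Kf + 1) / (mf / 2)) * Rpower (/ (mf / 2)) d).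
Proof.
  intros Hd Hk Hf Hg Hmf Hbf HKf HKf0 N1 N2 HM Hp.
  destruct (norm1d_sub_bounds d f g ltac:(lra) Hf Hg) as [Ne [NHB _]].
  destruct (Diff1d_data d g Hg) as [C1g [Mgi [_ [[ginv [Hginv _]] [Hgpos _]]]]].
  assert (Hgm : forall t, I t -> mf / 2 <= derI g t).
  { intros t It. specialize (Ne t It). apply Rabs_le_inv in Ne. pose proof (Hbf t It). lra. }
  assert (HBlg : holder d (fun t => ln (derI g t)) ((Kf + 1) / (mf / 2))).
  { apply holder_ln; [lra|auto|].
    apply (holder_ext d (fun t => derI f t + (derI g t - derI f t))); [intros; ring|].
    apply holder_add; auto. apply (holder_le d _ (norm1d d (fun x => g x - f x))); auto; lra. }
  destruct (derI_comp_bounds d k g Hd Hk Hg) as [mu [Mu [Ku [Hmu [Hbu HBu]]]]].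
  set (u := derI (fun x => k (g x))) in *.
  assert (HBlu : holder d (fun t => ln (u t)) M).
  { assert (HBlu : holder d (fun t => ln (u t)) (Ku / mu))
      by (apply holder_ln; auto; intros t It; apply Hbu; auto).
    apply (holder_le d _ (holder_sup d (fun t => ln (u t)))); [|apply (holder_sup_holder d _ _ HBlu)].
    change (Rabs (ln (u 0)) + holder_sup d (fun t => ln (u t)) <= M) in Hp.
    pose proof (Rabs_pos (ln (u 0))). lra. }
  apply (holder_precomp_inv d _ g ginv); auto; [lra| |apply Rdiv_lt_0_compat; lra| |].
  - pose proof (Rdiv_lt_0_compat (Kf + 1) (mf / 2) ltac:(lra) ltac:(lra)). lra.
  - exact (expansion_of_deriv_lower_bound g (derI g) (mf / 2) (proj1 C1g) Hgm).
  - apply (holder_ext d (fun t => ln (u t) - ln (derI g t))); [|apply holder_sub; auto].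
    intros t It. unfold u. rewrite (proj2 (derI_comp k g Hk C1g Mgi t It)).
    destruct Hk as [_ [_ [_ [Mk Hkp]]]].
    rewrite ln_mult; [ring| apply Hkp; apply Mgi; auto| apply Hgpos; auto].
Qed.
Definition zrange (Q : Z) : list Z := map (fun j => (Z.of_nat j - Q)%Z) (seq 0 (Z.to_nat (2 * Q + 1))).

Fixpoint zlists (Q : Z) (n : nat) : list (list Z) :=
  match n with
  | O => nil :: nil
  | S n => flat_map (fun z => map (cons z) (zlists Q n)) (zrange Q)
  end.

Lemma zrange_in Q z : (- Q <= z <= Q)%Z -> In z (zrange Q).
Proof.
  intros H. unfold zrange. apply in_map_iff. exists (Z.to_nat (z + Q)). split.
  - rewrite Z2Nat.id; lia.
  - apply in_seq. lia.
Qed.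

Lemma zlists_in Q l : (forall z, In z l -> (- Q <= z <= Q)%Z) -> In l (zlists Q (length l)).
Proof.
  induction l as [|a l IH]; intros H; simpl; [auto|].
  apply in_flat_map. exists a. split; [apply zrange_in; apply H; simpl; auto|].
  apply in_map. apply IH. intros z Hz; apply H; simpl; auto.
Qed.

Lemma finite_representatives {T B} (P : T -> Prop) (pat : T -> B) (LP : list B) :
  exists L, (forall k, In k L -> P k) /\
    forall k, P k -> In (pat k) LP -> exists k', In k' L /\ pat k' = pat k.
Proof.
  induction LP as [|pi LP [L [HLP HL]]].
  - exists nil. split; [intros k []|]. intros k _ [].
  - destruct (classic (exists k0, P k0 /\ pat k0 = pi)) as [[k0 [Pk0 Ek0]]|Hno].
    + exists (k0 :: L). split; [intros k [<-|Hk]; auto|].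
      intros k Pk [Hin|Hin].
      * exists k0. split; [left; auto|]. congruence.
      * destruct (HL k Pk Hin) as [k' [A B']]. exists k'. split; [right; auto|auto].
    + exists L. split; auto. intros k Pk [Hin|Hin].
      * exfalso. apply Hno. exists k; auto.
      * apply HL; auto.
Qed.

Lemma grid_near (Ng : nat) t : (0 < Ng)%nat -> I t -> exists i, (i <= Ng)%nat /\
  Rabs (t - INR i / INR Ng) <= / INR Ng.
Proof.
  intros HN It. pose proof (lt_0_INR _ HN) as HNr. destruct It as [t0 t1].
  set (z := (up (t * INR Ng) - 1)%Z).
  destruct (archimed (t * INR Ng)) as [A1 A2].
  assert (Hz1 : IZR z <= t * INR Ng) by (unfold z; rewrite minus_IZR; simpl; lra).
  assert (Hz2 : t * INR Ng < IZR z + 1) by (unfold z; rewrite minus_IZR; simpl; lra).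
  assert (Hz0' : (-1 < z)%Z) by (apply lt_IZR; nra).
  assert (Hz0 : (0 <= z)%Z) by lia.
  exists (Z.to_nat z).
  assert (Ei : INR (Z.to_nat z) = IZR z) by (rewrite INR_IZR_INZ, Z2Nat.id; auto).
  split.
  - apply INR_le. rewrite Ei. nra.
  - rewrite Ei. replace (t - IZR z / INR Ng) with ((t * INR Ng - IZR z) / INR Ng) by (field; lra).
    unfold Rdiv. rewrite Rabs_mult, Rabs_inv. rewrite (Rabs_right (INR Ng)) by lra.
    rewrite Rabs_right by lra. rewrite <- (Rmult_1_l (/ INR Ng)) at 2.
    apply Rmult_le_compat_r; [left; apply Rinv_0_lt_compat; auto|lra].
Qed.

Lemma grid_I (Ng : nat) i : (0 < Ng)%nat -> (i <= Ng)%nat -> I (INR i / INR Ng).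
Proof.
  intros HN Hi. pose proof (lt_0_INR _ HN). apply le_INR in Hi. pose proof (pos_INR i).
  unfold I. split.
  - unfold Rdiv. apply Rmult_le_pos; [lra|left; apply Rinv_0_lt_compat; lra].
  - apply (Rmult_le_reg_r (INR Ng)); auto. unfold Rdiv. rewrite Rmult_assoc, Rinv_l; lra.
Qed.

Lemma grid_fine d theta : 0 < d -> 0 < theta ->
  exists Ng : nat, (0 < Ng)%nat /\ Rpower (/ INR Ng) d <= theta.
Proof.
  intros Hd Ht. set (X := exp (Rabs (ln theta) / d)).
  assert (HX : 0 < X) by apply exp_pos.
  destruct (archimed X) as [A1 A2].
  assert (Hu0 : (0 <= up X)%Z) by (apply le_IZR; simpl; lra).
  exists (S (Z.to_nat (up X))). split; [lia|].
  set (n := INR (S (Z.to_nat (up X)))).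
  assert (HN : X < n) by (unfold n; rewrite S_INR, INR_IZR_INZ, Z2Nat.id; auto; lra).
  assert (Hln : Rabs (ln theta) / d < ln n).
  { unfold X in HN. rewrite <- (ln_exp (Rabs (ln theta) / d)). apply ln_increasing; auto. }
  assert (Rabs (ln theta) < d * ln n).
  { apply (Rmult_lt_compat_l d) in Hln; auto.
    replace (d * (Rabs (ln theta) / d)) with (Rabs (ln theta)) in Hln by (field; lra). lra. }
  unfold Rpower. rewrite ln_Rinv by lra. rewrite <- (exp_ln theta) by auto. apply exp_le.
  pose proof (Rle_abs (- ln theta)). rewrite Rabs_Ropp in *. lra.
Qed.

Lemma up_close x y : up x = up y -> Rabs (x - y) < 1.
Proof.
  intros E. destruct (archimed x) as [A1 A2]. destruct (archimed y) as [B1 B2]. rewrite E in A1, A2.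
  apply Rabs_def1; lra.
Qed.

Lemma up_bound w A x : 0 < w -> Rabs x <= A ->
  (- (up (A / w) + 1) <= up (x / w) <= up (A / w) + 1)%Z.
Proof.
  intros Hw Hx. apply Rabs_le_inv in Hx.
  destruct (archimed (x / w)) as [A1 A2]. destruct (archimed (A / w)) as [B1 B2].
  assert (0 < / w) by (apply Rinv_0_lt_compat; lra).
  assert (x / w <= A / w) by (unfold Rdiv; apply Rmult_le_compat_r; lra).
  assert (- (A / w) <= x / w)
    by (replace (- (A / w)) with ((- A) / w) by (field; lra); unfold Rdiv; apply Rmult_le_compat_r; lra).
  assert (Hlo : (- up (A / w) < up (x / w))%Z) by (apply lt_IZR; rewrite opp_IZR; lra).
  assert (Hhi : (up (x / w) < up (A / w) + 1)%Z) by (apply lt_IZR; rewrite plus_IZR; simpl; lra).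
  lia.
Qed.

Lemma map_eq_in {A B} (F G : A -> B) l : map F l = map G l -> forall i, In i l -> F i = G i.
Proof.
  induction l as [|a l IH]; simpl; intros E i Hi; [contradiction|].
  injection E as E1 E2. destruct Hi as [->|Hi]; auto.
Qed.

Definition grid_pattern (Ng : nat) w (k : R -> R) : list Z :=
  map (fun i => up (ln (derI k (INR i / INR Ng)) / w)) (seq 0 (S Ng)).

Lemma same_pattern_close d c A Ng k1 k2 : 0 < d -> 0 < c -> 0 <= A -> (0 < Ng)%nat ->
  Rpower (/ INR Ng) d <= c / (6 * (A + 1)) ->
  holder d (fun t => ln (derI k1 t)) A -> holder d (fun t => ln (derI k2 t)) A ->
  grid_pattern Ng (c / 3) k1 = grid_pattern Ng (c / 3) k2 ->
  forall t, I t -> Rabs (ln (derI k1 t) - ln (derI k2 t)) <= 2 * c / 3.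
Proof.
  intros Hd Hc HA HN Hp H1 H2 E t It.
  destruct (grid_near Ng t HN It) as [i [Hi Hti]].
  set (ti := INR i / INR Ng). assert (Iti : I ti) by (apply grid_I; auto).
  assert (Eg := map_eq_in _ _ _ E i ltac:(apply in_seq; lia)). cbv beta in Eg.
  pose proof (up_close _ _ Eg) as Hc1. fold ti in Hc1.
  assert (Hw : Rabs (ln (derI k1 ti) - ln (derI k2 ti)) < c / 3).
  { set (q := ln (derI k1 ti) / (c / 3) - ln (derI k2 ti) / (c / 3)) in *.
    replace (ln (derI k1 ti) - ln (derI k2 ti)) with (q * (c / 3)) by (unfold q; field; lra).
    rewrite Rabs_mult. rewrite (Rabs_right (c / 3)) by lra.
    assert (0 < c / 3) by lra. pose proof (Rabs_pos q). nra. }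
  assert (Hnear : forall (phi : R -> R), holder d phi A -> Rabs (phi t - phi ti) <= c / 6).
  { intros phi Hphi. destruct (Req_dec ti t) as [Heq|Hne].
    - rewrite Heq. replace (phi t - phi t) with 0 by ring. rewrite Rabs_R0. lra.
    - specialize (Hphi ti t Iti It Hne). eapply Rle_trans; [apply Hphi|].
      assert (Rpower (Rabs (t - ti)) d <= c / (6 * (A + 1))).
      { eapply Rle_trans; [|apply Hp]. apply Rle_Rpower_l; [lra|]. split; auto. apply Rabs_pos_lt. lra. }
      assert (A * (c / (6 * (A + 1))) <= c / 6).
      { unfold Rdiv. rewrite Rinv_mult. 
        assert (A * / (A + 1) <= 1)
          by (apply (Rmult_le_reg_r (A + 1)); [lra|]; rewrite Rmult_assoc, Rinv_l; lra).
        assert (0 < / (A + 1)) by (apply Rinv_0_lt_compat; lra).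
        replace (A * (c * (/ 6 * / (A + 1)))) with ((A * / (A + 1)) * (c * / 6)) by ring. nra. }
      pose proof (Rpower_pos (Rabs (t - ti)) d). nra. }
  pose proof (Hnear _ H1). pose proof (Hnear _ H2).
  replace (ln (derI k1 t) - ln (derI k2 t)) with
    ((ln (derI k1 t) - ln (derI k1 ti)) + (ln (derI k1 ti) - ln (derI k2 ti)) - (ln (derI k2 t) - ln (derI k2 ti))) by ring.
  eapply Rle_trans; [apply Rabs_triang|]. rewrite Rabs_Ropp.
  pose proof (Rabs_triang (ln (derI k1 t) - ln (derI k1 ti)) (ln (derI k1 ti) - ln (derI k2 ti))). lra.
Qed.

(** Condition (a) makes [G] uniformly discrete for [sup |ln k1' - ln k2'|], while
    the [ln k'] in a Hölder ball (all vanishing at [0]) are determined up to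
    [2c/3] by their values on a finite grid rounded to multiples of [c/3]. *)
Lemma holder_ball_finite_mod_G G d A : 0 < d -> is_subgroup_Diff03 G -> condition_a G -> 0 <= A ->
  exists L, (forall k, In k L -> G k) /\
    forall k, G k -> holder d (fun t => ln (derI k t)) A -> exists k', In k' L /\ same_on_I k' k.
Proof.
  intros Hd HG [c [Hc Hca]] HA.
  destruct (grid_fine d (c / (6 * (A + 1))) Hd ltac:(apply Rdiv_lt_0_compat; lra)) as [Ng [HNg HNp]].
  set (w := c / 3). set (Q := (up (A / w) + 1)%Z).
  set (Rel := fun k => G k /\ holder d (fun t => ln (derI k t)) A).
  assert (Hin : forall k, Rel k -> In (grid_pattern Ng w k) (zlists Q (S Ng))).
  { intros k [Gk Hk].
    replace (S Ng) with (length (grid_pattern Ng w k))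
      by (unfold grid_pattern; rewrite length_map, length_seq; auto).
    apply zlists_in. intros z Hz. unfold grid_pattern in Hz. apply in_map_iff in Hz as [i [<- Hi]].
    apply in_seq in Hi.
    assert (D0 : derI k 0 = 1) by (apply (Diff03_data k (proj1 HG k Gk))).
    pose proof (holder_abs_bound d _ _ ltac:(lra) Hk (INR i / INR Ng) (grid_I Ng i HNg ltac:(lia))) as Hb.
    cbv beta in Hb. rewrite D0, ln_1, Rabs_R0, Rplus_0_l in Hb.
    apply up_bound; auto; unfold w; lra. }
  destruct (finite_representatives Rel (grid_pattern Ng w) (zlists Q (S Ng))) as [L [HLP HL]].
  exists L. split; [intros k Hk; apply (HLP k Hk)|].
  intros k Gk Hk. destruct (HL k (conj Gk Hk) (Hin k (conj Gk Hk))) as [k' [Ink' Epat]].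
  destruct (HLP k' Ink') as [Gk' Hk'].
  exists k'. split; auto. apply NNPP. intros Hns. specialize (Hca k' k Gk' Gk Hns).
  assert (Rsup (fun r => exists t, I t /\ r = Rabs (ln (derI k' t) - ln (derI k t))) <= 2 * c / 3).
  { apply Rsup_le.
    - exists (Rabs (ln (derI k' 0) - ln (derI k 0))). exists 0. split; auto. unfold I; lra.
    - intros r [t [It ->]]. apply (same_pattern_close d c A Ng k' k); auto; lra. }
  lra.
Qed.

Lemma p_delta_comp_cont_list d f L : 0 < d <= 1 -> Diff1d d f -> (forall k, In k L -> C3I_pos k) ->
  forall eps, 0 < eps -> exists eta, 0 < eta /\
    forall k, In k L -> forall g, Diff1d d g -> norm1d d (fun x => g x - f x) < eta ->
      Rabs (p_delta d (fun x => k (g x)) - p_delta d (fun x => k (f x))) < eps.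
Proof.
  intros Hd Hf HL eps Heps. induction L as [|k L IH].
  - exists 1. split; [lra|]. intros k [].
  - destruct IH as [e1 [He1 H1]]; [intros k' Hk'; apply HL; simpl; auto|].
    destruct (p_delta_comp_cont d k f Hd (HL k (or_introl eq_refl)) Hf eps Heps) as [e2 [He2 H2]].
    exists (Rmin e1 e2). split; [apply Rmin_case; lra|].
    intros k' [<-|Hk'] g Hg HN.
    + apply H2; auto. eapply Rlt_le_trans; [apply HN|apply Rmin_r].
    + apply H1; auto. eapply Rlt_le_trans; [apply HN|apply Rmin_l].
Qed.

Lemma r_delta_lsc G d f : 0 < d <= 1 -> is_subgroup_Diff03 G -> condition_a G -> Diff1d d f ->
  forall eps, 0 < eps -> eps <= 1 ->
  exists eta, 0 < eta /\ forall g, Diff1d d g -> norm1d d (fun x => g x - f x) < eta ->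
  r_delta G d f < r_delta G d g + eps.
Proof.
  intros Hd HG Ha Hf eps Heps Heps1.
  destruct (derI_bounds d f ltac:(lra) Hf) as [mf [Mf [Kf [Hmf [HKf0 [Hbf HKf]]]]]].
  set (rf := r_delta G d f). assert (Hrf : 0 <= rf) by (apply r_delta_ge0; auto).
  set (A := (rf + 1 + (Kf + 1) / (mf / 2)) * Rpower (/ (mf / 2)) d).
  assert (HA : 0 <= A).
  { unfold A. apply Rmult_le_pos; [|left; apply Rpower_pos].
    pose proof (Rdiv_lt_0_compat (Kf + 1) (mf / 2) ltac:(lra) ltac:(lra)). lra. }
  destruct (holder_ball_finite_mod_G G d A ltac:(lra) HG Ha HA) as [L [HLG HL]].
  destruct (p_delta_comp_cont_list d f L Hd Hf
              (fun k Hk => Diff03_C3I_pos k (proj1 HG k (HLG k Hk))) (eps / 2)) as [eta1 [Heta1 H1]];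
    [lra|].
  destruct (r_delta_usc G d f Hd HG Hf (1 / 2)) as [eta2 [Heta2 H2]]; [lra|].
  exists (Rmin (Rmin 1 (mf / 2)) (Rmin eta1 eta2)). split; [repeat apply Rmin_case; lra|].
  intros g Hg HN. set (N := norm1d d (fun x => g x - f x)) in *.
  apply Rmin_Rgt in HN as [[N1 N2]%Rmin_Rgt [N3 N4]%Rmin_Rgt].
  specialize (H2 g Hg N4). fold rf in H2.
  destruct (glb_approx _ _ (r_delta_glb G d g Hd HG Hg) (eps / 2)) as [s [Hs Hsl]]; [lra|].
  destruct (r_set_elem G d g s HG Hg Hs) as [k [Gk ->]].
  assert (Hk : holder d (fun t => ln (derI k t)) A).
  { apply (holder_ln_derI_bound d k f g mf Mf Kf (rf + 1)); auto; try (fold N; lra).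
    apply Diff03_C3I_pos, HG; auto. }
  destruct (HL k Gk Hk) as [k' [Ink' Same]].
  destruct (Diff1d_data d g Hg) as [C1g [Mgi _]].
  pose proof (Diff03_C3I_pos k' (proj1 HG k' (HLG k' Ink'))) as Hk'.
  rewrite <- (p_delta_comp_ext d k' k g Hk' C1g Mgi Same) in Hsl.
  specialize (H1 k' Ink' g Hg N3).
  destruct (r_delta_glb G d f Hd HG Hf) as [Hlow _].
  specialize (Hlow _ (r_set_intro G d f k' HG (HLG k' Ink'))). fold rf in Hlow.
  apply Rlt_le, Rabs_le_inv in H1. lra.
Qed.

Lemma r_delta_cont G d : 0 < d <= 1 -> is_subgroup_Diff03 G -> condition_a G ->
  cont_Diff1d d (r_delta G d).
Proof.
  intros Hd HG Ha f Hf eps Heps.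
  set (e := Rmin eps 1). assert (He : 0 < e) by (unfold e; apply Rmin_case; lra).
  assert (He1 : e <= 1) by apply Rmin_r. assert (He2 : e <= eps) by apply Rmin_l.
  destruct (r_delta_usc G d f Hd HG Hf e He) as [e1 [He1' H1]].
  destruct (r_delta_lsc G d f Hd HG Ha Hf e He He1) as [e2 [He2' H2]].
  exists (Rmin e1 e2). split; [apply Rmin_case; lra|].
  intros g Hg HN.
  specialize (H1 g Hg (Rlt_le_trans _ _ _ HN (Rmin_l _ _))).
  specialize (H2 g Hg (Rlt_le_trans _ _ _ HN (Rmin_r _ _))).
  apply Rabs_def1; lra.
Qed.

Theorem mainTheorem16 (delta : R) (G : (R -> R) -> Prop) :
  0 < delta < 1 / 2 ->
  is_subgroup_Diff03 G ->
  condition_a G ->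
  cont_Diff1d delta (p_delta delta) /\ cont_Diff1d delta (r_delta G delta).
Proof.
  intros Hd HG Ha. split.
  - apply p_delta_cont; lra.
  - apply r_delta_cont; auto; lra.
Qed.
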